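(* Let $g\ge1$ and $n\in\mathbb{Z}\setminus\{0\}$. Let $u_1,\dots,u_{2g+1}$ be pairwise distinct complex numbers varying in a small open set. Let $\gamma_1,\dots,\gamma_{2g}$ be a basis of the first homology of the curve $v^2=(u-u_1)\cdots(u-u_{2g+1})$, represented by cycles avoiding the branch points and infinity and transported continuously as the $u_j$ vary. Let $c_1,\dots,c_{2g}\in\mathbb{C}$ be arbitrary constants, and set $$a_i=\sum_{k=1}^{2g}c_k\oint_{\gamma_k}\frac{v^n\,du}{u-u_i},\qquad A^{(i)}=\begin{pmatrix} n/4 & a_i\\ 0 & -n/4\end{pmatrix},\qquad i=1,\dots,2g+1.$$ Then the matrices $A^{(i)}$ satisfy the Schlesinger system $$\frac{\partial A^{(j)}}{\partial u_k}=\frac{[A^{(k)},A^{(j)}]}{u_k-u_j}\ (k\ne j),\qquad \frac{\partial A^{(k)}}{\partial u_k}=-\sum_{j\neq k}\frac{[A^{(k)},A^{(j)}]}{u_k-u_j},$$ and $A^{(\infty)}:=-A^{(1)}-\dots-A^{(2g+1)}$ is constant. *)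

From Stdlib Require Import Reals ZArith Arith.
From Coquelicot Require Import Coquelicot.
Open Scope C_scope.

Definition zpowC (z : C) (n : Z) : C :=
  match n with
  | Z0 => RtoC 1
  | Zpos p => pow_n (K:=C_Ring) z (Pos.to_nat p)
  | Zneg p => / pow_n (K:=C_Ring) z (Pos.to_nat p)
  end.

Fixpoint sumC (m : nat) (f : nat -> C) : C :=
  match m with O => RtoC 0 | S m' => sumC m' f + f m' end.

Definition upd (u : nat -> C) (k : nat) (z : C) : nat -> C :=
  fun i => if Nat.eqb i k then z else u i.

Definition branchpoly (N : nat) (u : nat -> C) (x : C) : C :=
  let fix pr (m : nat) : C := match m with O => RtoC 1 | S m' => pr m' * (x - u m') end in pr N.

(* open subset of C^N (only the first N coordinates matter) *)
Definition openN (N : nat) (U : (nat -> C) -> Prop) : Prop :=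
  forall u, U u -> exists eps : R, (0 < eps)%R /\
    forall u', (forall i, (i < N)%nat -> (Cmod (u' i - u i) < eps)%R) -> U u'.

Record mat2 := Mat2 { m11 : C; m12 : C; m21 : C; m22 : C }.

Definition mmul (A B : mat2) : mat2 :=
  Mat2 (m11 A * m11 B + m12 A * m21 B) (m11 A * m12 B + m12 A * m22 B)
       (m21 A * m11 B + m22 A * m21 B) (m21 A * m12 B + m22 A * m22 B).
Definition madd (A B : mat2) : mat2 :=
  Mat2 (m11 A + m11 B) (m12 A + m12 B) (m21 A + m21 B) (m22 A + m22 B).
Definition mscale (c : C) (A : mat2) : mat2 :=
  Mat2 (c * m11 A) (c * m12 A) (c * m21 A) (c * m22 A).
Definition mopp (A : mat2) : mat2 := mscale (RtoC (-1)) A.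
Definition mzero : mat2 := Mat2 (RtoC 0) (RtoC 0) (RtoC 0) (RtoC 0).
Definition comm (A B : mat2) : mat2 := madd (mmul A B) (mopp (mmul B A)).
Fixpoint msum (m : nat) (f : nat -> mat2) : mat2 :=
  match m with O => mzero | S m' => madd (msum m' f) (f m') end.

Definition mderiv (F : C -> mat2) (z : C) (D : mat2) : Prop :=
  is_derive (K:=C_AbsRing) (V:=C_NormedModule) (fun w => m11 (F w)) z (m11 D) /\
  is_derive (K:=C_AbsRing) (V:=C_NormedModule) (fun w => m12 (F w)) z (m12 D) /\
  is_derive (K:=C_AbsRing) (V:=C_NormedModule) (fun w => m21 (F w)) z (m21 D) /\
  is_derive (K:=C_AbsRing) (V:=C_NormedModule) (fun w => m22 (F w)) z (m22 D).

(* the contour integral over a closed cycle on the curve v^2 = prod (u - u_i):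
   the cycle is t |-> (sigma t, V t), t in [0,1], sigma' = dsigma *)
Definition cyc_int (sigma dsigma : R -> C) (V : R -> C) (h : C -> C -> C) : C :=
  RInt (V:=C_R_CompleteNormedModule) (fun t => h (sigma t) (V t) * dsigma t) 0 1.

Definition a_coef (g : nat) (n : Z) (c : nat -> C) (sigma dsigma : nat -> R -> C)
  (V : nat -> (nat -> C) -> R -> C) (u : nat -> C) (i : nat) : C :=
  sumC (2 * g) (fun k => c k *
    cyc_int (sigma k) (dsigma k) (V k u) (fun x v => zpowC v n / (x - u i))).

Definition Amat (g : nat) (n : Z) (c : nat -> C) (sigma dsigma : nat -> R -> C)
  (V : nat -> (nat -> C) -> R -> C) (u : nat -> C) (i : nat) : mat2 :=
  Mat2 (RtoC (IZR n / 4)%R) (a_coef g n c sigma dsigma V u i) (RtoC 0) (RtoC (- (IZR n / 4))%R).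

Definition Ainf (g : nat) (n : Z) (c : nat -> C) (sigma dsigma : nat -> R -> C)
  (V : nat -> (nat -> C) -> R -> C) (u : nat -> C) : mat2 :=
  mopp (msum (2 * g + 1) (Amat g n c sigma dsigma V u)).

(* On the curve [v^2 = prod_i (u - u_i)] the branch [v] depends on [u_k] like [(u - u_k)^(1/2)],
   so differentiating [a_j = sum_m c_m \oint v^n du / (u - u_j)] under the integral sign gives
     [d a_j / d u_k = sum_m c_m \oint v^n / (u - u_k) (- (n/2) / (u - u_j) + [j = k] / (u - u_k)) du].
   For [k <> j], partial fractions turn this into [- (n/2) (a_k - a_j) / (u_k - u_j)], the only
   nonzero entry of [[A^(k), A^(j)] / (u_k - u_j)].  Summed over [j], the integrand is minus the
   derivative of [v^n / (u - u_k)], a single-valued function on the closed cycle, so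
   [sum_j d a_j / d u_k = 0]: this is the diagonal equation and the constancy of [A^(oo)].
   Differentiating under the integral sign needs bounds uniform along the cycle: moving [u_k] to
   [u_k + h] multiplies [v] by a root [q] of [q^2 = 1 - h / (u - u_k)], and the continuity of the
   transported cycle forces [Re q > 0]. *)

From Stdlib Require Import Reals ZArith Arith Lra Lia Ranalysis5 FunctionalExtensionality.
From Coquelicot Require Import Coquelicot.
Open Scope C_scope.

Lemma norm_C_R (z : C) : @norm R_AbsRing C_R_NormedModule z = Cmod z.
Proof.
  unfold norm; simpl; unfold prod_norm, Cmod; simpl.
  change (@norm R_AbsRing R_NormedModule) with Rabs.
  rewrite !Rmult_1_r, <- !Rabs_mult, !Rabs_right; auto; apply Rle_ge, Rle_0_sqr.
Qed.

Lemma Cmod_triangle_rev (a b : C) : Cmod a - Cmod b <= Cmod (a - b).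
Proof.
  pose proof (Cmod_triangle (a - b) b) as H.
  replace (a - b + b) with a in H by ring. lra.
Qed.

Lemma Cmod_sub_sym (a b : C) : Cmod (a - b) = Cmod (b - a).
Proof. rewrite <- Cmod_opp. f_equal. ring. Qed.

Lemma Cmod_sub_le (a b : C) : Cmod (a - b) <= Cmod a + Cmod b.
Proof. rewrite <- (Cmod_opp b). apply Cmod_triangle. Qed.

Lemma Cmod_eq0_small (z : C) : (forall eps, 0 < eps -> Cmod z <= eps) -> z = 0.
Proof.
  intros H. destruct (Ceq_dec z 0) as [|Hz]; auto.
  pose proof (proj1 (Cmod_gt_0 z) Hz). specialize (H (Cmod z / 2)%R). lra.
Qed.

Notation is_Cderive := (@is_derive C_AbsRing C_NormedModule).
Notation is_Rderive := (@is_derive R_AbsRing C_R_NormedModule).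
Notation CRInt := (@RInt C_R_CompleteNormedModule).
Notation ex_CRInt := (@ex_RInt C_R_NormedModule).
Notation is_CRInt := (@is_RInt C_R_NormedModule).

Lemma RtoC_neq0 (x : R) : x <> 0%R -> RtoC x <> 0.
Proof. intros H E. apply H. now injection E. Qed.

Lemma sumC_ext M (f g : nat -> C) : (forall j, (j < M)%nat -> f j = g j) -> sumC M f = sumC M g.
Proof.
  induction M as [|M IH]; intros H; [reflexivity|]. simpl.
  rewrite IH by (intros; apply H; lia). now rewrite H by lia.
Qed.

Lemma sumC_plus M (f g : nat -> C) : sumC M (fun j => f j + g j) = sumC M f + sumC M g.
Proof. induction M as [|M IH]; simpl; [ring|]. rewrite IH. ring. Qed.

Lemma sumC_minus M (f g : nat -> C) : sumC M (fun j => f j - g j) = sumC M f - sumC M g.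
Proof. induction M as [|M IH]; simpl; [ring|]. rewrite IH. ring. Qed.

Lemma sumC_scal M c (f : nat -> C) : sumC M (fun j => c * f j) = c * sumC M f.
Proof. induction M as [|M IH]; simpl; [ring|]. rewrite IH. ring. Qed.

Lemma sumC_0 M : sumC M (fun _ => RtoC 0) = 0.
Proof. induction M as [|M IH]; simpl; [reflexivity|]. rewrite IH. ring. Qed.

Lemma sumC_swap M P (F : nat -> nat -> C) :
  sumC M (fun j => sumC P (fun m => F j m)) = sumC P (fun m => sumC M (fun j => F j m)).
Proof.
  induction M as [|M IH]; simpl; [now rewrite sumC_0|]. now rewrite IH, <- sumC_plus.
Qed.

Lemma sumC_indicator M k (b : C) : (k < M)%nat ->
  sumC M (fun j => if Nat.eqb j k then b else 0) = b.
Proof.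
  induction M as [|M IH]; intros Hk; [lia|]. simpl.
  destruct (Nat.eqb_spec M k) as [->|Hn].
  - rewrite (sumC_ext _ _ (fun _ => RtoC 0)), sumC_0; [ring|].
    intros j Hj. destruct (Nat.eqb_spec j k); [lia | reflexivity].
  - rewrite IH by lia. ring.
Qed.

Lemma sumC_split M k (f : nat -> C) : (k < M)%nat ->
  sumC M f = f k + sumC M (fun j => if Nat.eqb j k then 0 else f j).
Proof.
  intros Hk. rewrite <- (sumC_indicator M k (f k)) at 1 by auto. rewrite <- sumC_plus.
  apply sumC_ext. intros j _. destruct (Nat.eqb_spec j k); subst; ring.
Qed.

(** * Continuity of complex functions of a real variable *)

Definition ccont (f : R -> C) (t : R) : Prop :=
  forall eps, 0 < eps -> exists d, 0 < d /\
    forall t', Rabs (t' - t) < d -> Cmod (f t' - f t) < eps.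

Lemma ccont_continuous (f : R -> C) t :
  ccont f t -> @continuous R_UniformSpace C_R_NormedModule f t.
Proof.
  intros H. apply filterlim_locally. intros eps.
  destruct (H eps (cond_pos eps)) as [d [Hd Hf]].
  exists (mkposreal d Hd). intros y Hy. apply norm_compat1.
  rewrite norm_C_R. apply Hf, Hy.
Qed.

Lemma continuous_ccont (f : R -> C) t :
  @continuous R_UniformSpace C_R_NormedModule f t -> ccont f t.
Proof.
  intros H e He. unfold continuous in H. rewrite filterlim_locally in H.
  assert (Hp : 0 < e / @norm_factor R_AbsRing C_R_NormedModule)
    by (apply Rdiv_lt_0_compat; auto; apply norm_factor_gt_0).
  destruct (H (mkposreal _ Hp)) as [d Hd]. exists d. split; [apply cond_pos|].
  intros t' Ht. specialize (Hd t' Ht). apply norm_compat2 in Hd.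
  rewrite norm_C_R in Hd. simpl in Hd.
  replace (norm_factor * (e / norm_factor))%R with e in Hd; auto.
  field. apply Rgt_not_eq, norm_factor_gt_0.
Qed.

Lemma ccont_ext_near (f g : R -> C) t :
  (exists r, 0 < r /\ forall x, Rabs (x - t) < r -> f x = g x) -> ccont g t -> ccont f t.
Proof.
  intros [r [Hr E]] H e He. destruct (H e He) as [d [Hd Hb]].
  exists (Rmin d r). split; [now apply Rmin_pos|]. intros t' Ht.
  rewrite !E; [apply Hb| |]; try (eapply Rlt_le_trans; [exact Ht| apply Rmin_l]).
  - rewrite Rminus_diag, Rabs_R0. lra.
  - eapply Rlt_le_trans; [exact Ht| apply Rmin_r].
Qed.

Lemma ccont_const (c : C) t : ccont (fun _ => c) t.
Proof.
  intros e He. exists 1%R. split; [lra|]. intros.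
  replace (c - c) with (RtoC 0) by ring. rewrite Cmod_0. lra.
Qed.

Lemma ccont_plus (f g : R -> C) t :
  ccont f t -> ccont g t -> ccont (fun x => f x + g x) t.
Proof.
  intros Hf Hg e He.
  destruct (Hf (e/2)%R) as [d1 [Hd1 H1]]; [lra|].
  destruct (Hg (e/2)%R) as [d2 [Hd2 H2]]; [lra|].
  exists (Rmin d1 d2). split; [now apply Rmin_pos|]. intros t' Ht.
  specialize (H1 t' (Rlt_le_trans _ _ _ Ht (Rmin_l _ _))).
  specialize (H2 t' (Rlt_le_trans _ _ _ Ht (Rmin_r _ _))).
  replace (f t' + g t' - (f t + g t)) with ((f t' - f t) + (g t' - g t)) by ring.
  pose proof (Cmod_triangle (f t' - f t) (g t' - g t)). lra.
Qed.

Lemma ccont_opp (f : R -> C) t : ccont f t -> ccont (fun x => - f x) t.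
Proof.
  intros Hf e He. destruct (Hf e He) as [d [Hd H]]. exists d. split; auto.
  intros t' Ht. replace (- f t' - - f t) with (- (f t' - f t)) by ring.
  rewrite Cmod_opp. auto.
Qed.

Lemma ccont_minus (f g : R -> C) t :
  ccont f t -> ccont g t -> ccont (fun x => f x - g x) t.
Proof. intros. apply ccont_plus; auto. now apply ccont_opp. Qed.

Lemma ccont_mult (f g : R -> C) t :
  ccont f t -> ccont g t -> ccont (fun x => f x * g x) t.
Proof.
  intros Hf Hg e He.
  set (a := Cmod (f t)). set (b := Cmod (g t)).
  assert (Ha : 0 <= a) by apply Cmod_ge_0. assert (Hb : 0 <= b) by apply Cmod_ge_0.
  set (eta := Rmin 1 (e / (1 + a + b))).
  assert (Heta : 0 < eta) by (apply Rmin_pos; [lra | apply Rdiv_lt_0_compat; lra]).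
  assert (Heta1 : eta <= 1) by apply Rmin_l.
  assert (Heta2 : eta * (1 + a + b) <= e).
  { apply Rle_trans with (e / (1 + a + b) * (1 + a + b))%R.
    - apply Rmult_le_compat_r; [lra | apply Rmin_r].
    - right. field. lra. }
  destruct (Hf eta Heta) as [d1 [Hd1 H1]]. destruct (Hg eta Heta) as [d2 [Hd2 H2]].
  exists (Rmin d1 d2). split; [now apply Rmin_pos|]. intros t' Ht.
  specialize (H1 t' (Rlt_le_trans _ _ _ Ht (Rmin_l _ _))).
  specialize (H2 t' (Rlt_le_trans _ _ _ Ht (Rmin_r _ _))).
  set (x := f t' - f t) in *. set (y := g t' - g t) in *.
  replace (f t' * g t' - f t * g t) with (x * y + x * g t + f t * y)
    by (unfold x, y; ring).
  pose proof (Cmod_triangle (x * y + x * g t) (f t * y)) as T1.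
  pose proof (Cmod_triangle (x * y) (x * g t)) as T2.
  rewrite Cmod_mult in T1. rewrite !Cmod_mult in T2. fold a b in T1, T2.
  pose proof (Cmod_ge_0 x). pose proof (Cmod_ge_0 y).
  assert (Cmod x * Cmod y <= eta * eta) by (apply Rmult_le_compat; lra).
  assert (Cmod x * b <= eta * b) by (apply Rmult_le_compat_r; lra).
  assert (a * Cmod y <= a * eta) by (apply Rmult_le_compat_l; lra).
  assert (eta * eta <= eta) by nra.
  assert (Cmod x * Cmod y < eta) by nra.
  lra.
Qed.

Lemma ccont_inv (f : R -> C) t : f t <> 0 -> ccont f t -> ccont (fun x => / f x) t.
Proof.
  intros Hn Hf e He. pose proof (proj1 (Cmod_gt_0 _) Hn) as Hm.
  set (m := Cmod (f t)) in *.
  destruct (Hf (Rmin (m/2) (e * m * m / 2))%R) as [d [Hd H]].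
  { apply Rmin_pos; [lra|]. apply Rdiv_lt_0_compat; [|lra]. repeat apply Rmult_lt_0_compat; lra. }
  exists d. split; auto. intros t' Ht. specialize (H t' Ht).
  pose proof (Rmin_l (m/2) (e * m * m / 2)). pose proof (Rmin_r (m/2) (e * m * m / 2)).
  assert (Hm' : m / 2 <= Cmod (f t')).
  { pose proof (Cmod_triangle_rev (f t) (f t')). rewrite Cmod_sub_sym in H2. fold m in H2. lra. }
  assert (Hn' : f t' <> 0) by (intro E; rewrite E, Cmod_0 in Hm'; lra).
  replace (/ f t' - / f t) with ((f t - f t') / (f t' * f t)) by (field; auto).
  rewrite Cmod_div, Cmod_mult, Cmod_sub_sym by (apply Cmult_neq_0; auto). fold m.
  apply Rmult_lt_reg_r with (Cmod (f t') * m)%R; [nra|].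
  unfold Rdiv. rewrite Rmult_assoc, Rinv_l, Rmult_1_r by nra.
  assert (e * (m / 2 * m) <= e * (Cmod (f t') * m))
    by (apply Rmult_le_compat_l; [lra | apply Rmult_le_compat_r; lra]).
  lra.
Qed.

Definition clamp01 (t : R) : R := Rmax 0 (Rmin 1 t).

Lemma clamp01_id t : 0 <= t <= 1 -> clamp01 t = t.
Proof. intros. unfold clamp01. rewrite Rmin_right, Rmax_right; lra. Qed.

Lemma clamp01_range t : 0 <= clamp01 t <= 1.
Proof. unfold clamp01. split; [apply Rmax_l | apply Rmax_lub; [lra | apply Rmin_l]]. Qed.

Lemma clamp01_lipschitz a b : Rabs (clamp01 a - clamp01 b) <= Rabs (a - b).
Proof.
  unfold clamp01, Rmax, Rmin.
  repeat destruct Rle_dec; unfold Rabs; repeat destruct Rcase_abs; lra.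
Qed.

(* Continuity on [0,1], encoded as continuity everywhere of [f] precomposed with the clamp
   onto [0,1]. *)
Definition cont01 (f : R -> C) : Prop := forall t, ccont (fun x => f (clamp01 x)) t.

Lemma cont01_intro (f : R -> C) :
  (forall t, 0 <= t <= 1 -> forall eps, 0 < eps -> exists d, 0 < d /\
     forall t', 0 <= t' <= 1 -> Rabs (t' - t) < d -> Cmod (f t' - f t) < eps) ->
  cont01 f.
Proof.
  intros H t e He. destruct (H (clamp01 t) (clamp01_range t) e He) as [d [Hd Hf]].
  exists d. split; auto. intros t' Ht. apply Hf; [apply clamp01_range|].
  eapply Rle_lt_trans; [apply clamp01_lipschitz | exact Ht].
Qed.

Lemma cont01_of_ccont (f : R -> C) : (forall t, ccont f t) -> cont01 f.
Proof.
  intros H t e He. destruct (H (clamp01 t) e He) as [d [Hd Hf]]. exists d. split; auto.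
  intros t' Ht. apply Hf. eapply Rle_lt_trans; [apply clamp01_lipschitz | exact Ht].
Qed.

Lemma cont01_const (c : C) : cont01 (fun _ => c).
Proof. intros t. apply ccont_const. Qed.

Lemma cont01_plus (f g : R -> C) : cont01 f -> cont01 g -> cont01 (fun x => f x + g x).
Proof. intros Hf Hg t. exact (ccont_plus _ _ t (Hf t) (Hg t)). Qed.

Lemma cont01_minus (f g : R -> C) : cont01 f -> cont01 g -> cont01 (fun x => f x - g x).
Proof. intros Hf Hg t. exact (ccont_minus _ _ t (Hf t) (Hg t)). Qed.

Lemma cont01_mult (f g : R -> C) : cont01 f -> cont01 g -> cont01 (fun x => f x * g x).
Proof. intros Hf Hg t. exact (ccont_mult _ _ t (Hf t) (Hg t)). Qed.

Lemma cont01_inv (f : R -> C) :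
  (forall t, 0 <= t <= 1 -> f t <> 0) -> cont01 f -> cont01 (fun x => / f x).
Proof. intros Hn Hf t. exact (ccont_inv _ t (Hn _ (clamp01_range t)) (Hf t)). Qed.

Lemma cont01_sumC M (F : nat -> R -> C) :
  (forall j, (j < M)%nat -> cont01 (F j)) -> cont01 (fun x => sumC M (fun j => F j x)).
Proof.
  induction M as [|M IH]; intros H; [apply (cont01_const (RtoC 0))|].
  apply (cont01_plus (fun x => sumC M (fun j => F j x)) (F M)); [apply IH; intros|]; apply H; lia.
Qed.

Lemma cont01_interior (f : R -> C) t : cont01 f -> 0 < t < 1 -> ccont f t.
Proof.
  intros H Ht. apply ccont_ext_near with (fun x => f (clamp01 x)); [|apply H].
  exists (Rmin t (1 - t)). split; [apply Rmin_pos; lra|]. intros x Hx.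
  pose proof (Rmin_l t (1 - t)). pose proof (Rmin_r t (1 - t)).
  rewrite clamp01_id; auto. unfold Rabs in Hx. destruct Rcase_abs in Hx; lra.
Qed.

Lemma cont01_right0 (f : R -> C) : cont01 f ->
  forall eps, 0 < eps -> exists d, 0 < d /\ forall t, 0 < t < d -> Cmod (f t - f 0%R) < eps.
Proof.
  intros H e He. destruct (H 0%R e He) as [d [Hd Hb]]. exists (Rmin d 1).
  split; [apply Rmin_pos; lra|]. intros t Ht. pose proof (Rmin_l d 1). pose proof (Rmin_r d 1).
  specialize (Hb t). rewrite (clamp01_id t), (clamp01_id 0%R) in Hb by lra.
  apply Hb. rewrite Rminus_0_r, Rabs_right; lra.
Qed.

Lemma cont01_left1 (f : R -> C) : cont01 f ->
  forall eps, 0 < eps -> exists d, 0 < d /\ forall t, 1 - d < t < 1 -> Cmod (f t - f 1%R) < eps.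
Proof.
  intros H e He. destruct (H 1%R e He) as [d [Hd Hb]]. exists (Rmin d 1).
  split; [apply Rmin_pos; lra|]. intros t Ht. pose proof (Rmin_l d 1). pose proof (Rmin_r d 1).
  specialize (Hb t). rewrite (clamp01_id t), (clamp01_id 1%R) in Hb by lra.
  apply Hb. rewrite Rabs_left; lra.
Qed.

Lemma ccont_Cmod (f : R -> C) t : ccont f t -> continuity_pt (fun x => Cmod (f x)) t.
Proof.
  intros H e He. destruct (H e He) as [d [Hd Hf]]. exists d. split; auto.
  intros x [_ Hx]. simpl in *. unfold R_dist in *.
  eapply Rle_lt_trans; [|apply (Hf x Hx)].
  pose proof (Cmod_triangle_rev (f x) (f t)). pose proof (Cmod_triangle_rev (f t) (f x)).
  rewrite Cmod_sub_sym in H1. unfold Rabs; destruct Rcase_abs; lra.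
Qed.

Lemma ccont_Re (f : R -> C) t : ccont f t -> continuity_pt (fun x => Re (f x)) t.
Proof.
  intros H e He. destruct (H e He) as [d [Hd Hf]]. exists d. split; auto.
  intros x [_ Hx]. simpl in *. unfold R_dist in *.
  eapply Rle_lt_trans; [|apply (Hf x Hx)].
  replace (Re (f x) - Re (f t))%R with (Re (f x - f t))
    by (unfold Cminus; rewrite re_plus, re_opp; ring).
  apply re_le_Cmod.
Qed.

Lemma cont01_bounded (f : R -> C) : cont01 f ->
  exists M, 0 < M /\ forall t, 0 <= t <= 1 -> Cmod (f t) <= M.
Proof.
  intros H. destruct (continuity_ab_maj (fun x => Cmod (f (clamp01 x))) 0 1) as [x [HM _]];
    [lra | intros t _; now apply ccont_Cmod|].
  exists (Cmod (f (clamp01 x)) + 1)%R. split; [pose proof (Cmod_ge_0 (f (clamp01 x))); lra|].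
  intros t Ht. specialize (HM t Ht). simpl in HM. rewrite clamp01_id in HM; auto. lra.
Qed.

Lemma cont01_bounded_below (f : R -> C) : cont01 f -> (forall t, 0 <= t <= 1 -> f t <> 0) ->
  exists m, 0 < m /\ forall t, 0 <= t <= 1 -> m <= Cmod (f t).
Proof.
  intros H Hn. destruct (continuity_ab_min (fun x => Cmod (f (clamp01 x))) 0 1) as [x [HM _]];
    [lra | intros t _; now apply ccont_Cmod|].
  exists (Cmod (f (clamp01 x))). split; [apply Cmod_gt_0, Hn, clamp01_range|].
  intros t Ht. specialize (HM t Ht). simpl in HM. rewrite (clamp01_id t) in HM; auto.
Qed.

Lemma ex_RInt_cont01_sub (f : R -> C) a b : cont01 f -> 0 <= a <= b -> b <= 1 ->
  ex_CRInt f a b.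
Proof.
  intros H Ha Hb. apply (ex_RInt_ext (V:=C_R_NormedModule) (fun x => f (clamp01 x))).
  - intros x Hx. rewrite Rmin_left, Rmax_right in Hx by lra. rewrite clamp01_id; auto. lra.
  - apply (ex_RInt_continuous (V:=C_R_CompleteNormedModule)).
    intros z _. apply ccont_continuous, H.
Qed.

Lemma ex_RInt_cont01 (f : R -> C) : cont01 f -> ex_CRInt f 0 1.
Proof. intros H. apply ex_RInt_cont01_sub; auto; lra. Qed.

Lemma Cmod_RInt_le (f : R -> C) a b M : a <= b -> ex_CRInt f a b ->
  (forall t, a <= t <= b -> Cmod (f t) <= M) ->
  Cmod (CRInt f a b) <= (b - a) * M.
Proof.
  intros Hab Hex HM. rewrite <- norm_C_R.
  apply (norm_RInt_le_const (V:=C_R_NormedModule) f a b); auto.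
  - intros t Ht. rewrite norm_C_R. auto.
  - apply (RInt_correct (V:=C_R_CompleteNormedModule)), Hex.
Qed.

Lemma is_RInt_Ci (f : R -> C) a b l :
  is_CRInt f a b l -> is_CRInt (fun t => Ci * f t) a b (Ci * l).
Proof.
  intros H.
  pose proof (is_RInt_fct_extend_fst (U:=R_NormedModule) (V:=R_NormedModule) f a b l H) as H1.
  pose proof (is_RInt_fct_extend_snd (U:=R_NormedModule) (V:=R_NormedModule) f a b l H) as H2.
  apply (is_RInt_ext (V:=C_R_NormedModule) (fun t => (- snd (f t), fst (f t))%R)).
  { intros x _. destruct (f x). unfold Ci, Cmult; simpl. f_equal; ring. }
  replace (Ci * l) with ((- snd l)%R, fst l) by (destruct l; unfold Ci, Cmult; simpl; f_equal; ring).
  apply (is_RInt_fct_extend_pair (U:=R_NormedModule) (V:=R_NormedModule)); simpl; auto.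
  now apply (is_RInt_opp (V:=R_NormedModule)).
Qed.

Lemma is_RInt_Cmult (f : R -> C) a b l c :
  is_CRInt f a b l -> is_CRInt (fun t => c * f t) a b (c * l).
Proof.
  intros H.
  (* [c z = Re c * z + Im c * (i z)] writes complex scaling with real scalings only. *)
  assert (E : forall z : C, c * z = plus (scal (Re c) z) (scal (Im c) (Ci * z))).
  { intros z. rewrite !scal_R_Cmult. change (c * z = Re c * z + Im c * (Ci * z)).
    destruct c, z. unfold Ci, Re, Im, Cmult, Cplus, RtoC; simpl. f_equal; ring. }
  rewrite E.
  apply (is_RInt_ext (V:=C_R_NormedModule) (fun t => plus (scal (Re c) (f t)) (scal (Im c) (Ci * f t)))).
  { intros x _. symmetry. apply E. }
  apply (is_RInt_plus (V:=C_R_NormedModule)); apply (is_RInt_scal (V:=C_R_NormedModule)); auto.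
  now apply is_RInt_Ci.
Qed.

Lemma RInt_Cmult (f : R -> C) a b c :
  ex_CRInt f a b -> CRInt (fun t => c * f t) a b = c * CRInt f a b.
Proof.
  intros H. apply is_RInt_unique, is_RInt_Cmult.
  apply (RInt_correct (V:=C_R_CompleteNormedModule)), H.
Qed.

Lemma RInt_sumC M (F : nat -> R -> C) :
  (forall j, (j < M)%nat -> ex_CRInt (F j) 0 1) ->
  CRInt (fun t => sumC M (fun j => F j t)) 0 1 = sumC M (fun j => CRInt (F j) 0 1).
Proof.
  induction M as [|M IH]; intros H; simpl.
  - rewrite (RInt_const (V:=C_R_CompleteNormedModule)), scal_R_Cmult. ring.
  - rewrite <- IH by (intros; apply H; lia).
    apply (RInt_plus (V:=C_R_CompleteNormedModule) (fun t => sumC M (fun j => F j t)) (F M));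
      [|apply H; lia].
    apply (ex_RInt_ext (V:=C_R_NormedModule) (fun t => sumC M (fun j => F j t))); [auto|].
    clear IH. induction M as [|M IH]; simpl.
    + apply (ex_RInt_const (V:=C_R_NormedModule)).
    + apply (ex_RInt_plus (V:=C_R_NormedModule) (fun t => sumC M (fun j => F j t)) (F M));
        [apply IH; intros|]; apply H; lia.
Qed.

(* Unlike Coquelicot's [is_RInt_derive], this needs no derivative at the endpoints. *)
Lemma RInt_derive_interior (f df : R -> C) :
  (forall t, 0 < t < 1 -> is_Rderive f t (df t)) ->
  cont01 df -> cont01 f ->
  CRInt df 0 1 = f 1%R - f 0%R.
Proof.
  intros Hd Hdf Hf. destruct (cont01_bounded df Hdf) as [M [HM HMb]].
  apply Ceq_minus, Cmod_eq0_small. intros eps He.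
  destruct (cont01_right0 f Hf (eps/4)) as [d1 [Hd1 H1]]; [lra|].
  destruct (cont01_left1 f Hf (eps/4)) as [d2 [Hd2 H2]]; [lra|].
  set (eta := Rmin (Rmin (1/4) (d1/2)) (Rmin (d2/2) (eps / (4 * M)))).
  assert (Heta : 0 < eta) by (repeat apply Rmin_pos; try apply Rdiv_lt_0_compat; lra).
  assert (Heta1 : eta <= 1/4) by (unfold eta; eapply Rle_trans; [apply Rmin_l| apply Rmin_l]).
  assert (Heta2 : eta <= d1/2) by (unfold eta; eapply Rle_trans; [apply Rmin_l| apply Rmin_r]).
  assert (Heta3 : eta <= d2/2) by (unfold eta; eapply Rle_trans; [apply Rmin_r| apply Rmin_l]).
  assert (HetaM : eta * M <= eps / 4).
  { apply Rle_trans with (eps / (4 * M) * M)%R; [|right; field; lra].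
    apply Rmult_le_compat_r; [lra|]. unfold eta. eapply Rle_trans; apply Rmin_r. }
  assert (Hmid : CRInt df eta (1 - eta) = f (1 - eta)%R - f eta).
  { apply is_RInt_unique, (is_RInt_derive (V:=C_R_CompleteNormedModule));
      intros x Hx; rewrite Rmin_left, Rmax_right in Hx by lra.
    - apply Hd. lra.
    - apply ccont_continuous, cont01_interior; [auto | lra]. }
  assert (N1 : Cmod (CRInt df 0 eta) <= eps / 4).
  { eapply Rle_trans; [apply Cmod_RInt_le | rewrite Rminus_0_r; exact HetaM];
      [lra | apply ex_RInt_cont01_sub; auto; lra | intros; apply HMb; lra]. }
  assert (N2 : Cmod (CRInt df (1 - eta) 1) <= eps / 4).
  { eapply Rle_trans; [apply Cmod_RInt_le | replace (1 - (1 - eta))%R with eta by ring; exact HetaM];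
      [lra | apply ex_RInt_cont01_sub; auto; lra | intros; apply HMb; lra]. }
  assert (N3 : Cmod (f eta - f 0%R) < eps / 4) by (apply H1; lra).
  assert (N4 : Cmod (f (1 - eta)%R - f 1%R) < eps / 4) by (apply H2; lra).
  rewrite <- (RInt_Chasles (V:=C_R_CompleteNormedModule) df 0 eta 1)
    by (apply ex_RInt_cont01_sub; auto; lra).
  rewrite <- (RInt_Chasles (V:=C_R_CompleteNormedModule) df eta (1 - eta) 1)
    by (apply ex_RInt_cont01_sub; auto; lra).
  rewrite Hmid. repeat change (plus ?x ?y) with (x + y).
  set (A := CRInt df 0 eta) in *.
  set (B := CRInt df (1 - eta) 1) in *.
  replace (A + (f (1 - eta)%R - f eta + B) - (f 1%R - f 0%R))
    with ((A + B) + ((f (1 - eta)%R - f 1%R) - (f eta - f 0%R))) by ring.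
  pose proof (Cmod_triangle (A + B) ((f (1 - eta)%R - f 1%R) - (f eta - f 0%R))).
  pose proof (Cmod_triangle A B).
  pose proof (Cmod_sub_le (f (1 - eta)%R - f 1%R) (f eta - f 0%R)).
  lra.
Qed.

(** * Derivatives *)

Lemma is_derive_C_of_bound (F : C -> C) z0 l :
  (forall eps, 0 < eps -> exists d, 0 < d /\ forall h : C, h <> 0 -> Cmod h < d ->
     Cmod (F (z0 + h) - F z0 - h * l) <= eps * Cmod h) ->
  is_Cderive F z0 l.
Proof.
  intros H. split; [apply is_linear_scal_l|].
  intros x Hx. apply (is_filter_lim_locally_unique (V:=AbsRing_NormedModule C_AbsRing)) in Hx.
  subst x. intros eps. destruct (H eps (cond_pos eps)) as [d [Hd Hb]].
  assert (Hnf : 0 < @norm_factor C_AbsRing (AbsRing_NormedModule C_AbsRing))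
    by apply norm_factor_gt_0.
  exists (mkposreal (d / norm_factor) (Rdiv_lt_0_compat _ _ Hd Hnf)).
  intros y Hy. apply (norm_compat2 (V:=AbsRing_NormedModule C_AbsRing)) in Hy. simpl in Hy.
  replace (norm_factor * (d / norm_factor))%R with d in Hy by (field; lra).
  change (Cmod (y - z0) < d) in Hy.
  change (Cmod (F y - F z0 - (y - z0) * l) <= eps * Cmod (y - z0)).
  destruct (Ceq_dec (y - z0) 0) as [E|E].
  - apply Ceq_minus in E. change C in y. subst y.
    replace (F z0 - F z0 - (z0 - z0) * l) with (RtoC 0) by ring.
    replace (z0 - z0) with (RtoC 0) by ring. rewrite Cmod_0. lra.
  - specialize (Hb (y - z0) E Hy). assert (Ey : (z0 + (y - z0) : C) = y) by ring.
    now rewrite Ey in Hb.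
Qed.

Lemma is_derive_R_of_bound (f : R -> C) t l :
  (forall eps, 0 < eps -> exists d, 0 < d /\ forall h, h <> 0%R -> Rabs h < d ->
     Cmod (f (t + h)%R - f t - h * l) <= eps * Rabs h) ->
  is_Rderive f t l.
Proof.
  intros H. split; [apply is_linear_scal_l|].
  intros x Hx. apply (is_filter_lim_locally_unique (V:=R_NormedModule)) in Hx. subst x.
  intros eps. destruct (H eps (cond_pos eps)) as [d [Hd Hb]].
  exists (mkposreal d Hd). intros y Hy. change (Rabs (y - t) < d) in Hy.
  rewrite norm_C_R, scal_R_Cmult. change (norm (minus y t)) with (Rabs (y - t)).
  change (Cmod (f y - f t - (y - t)%R * l) <= eps * Rabs (y - t)).
  destruct (Req_dec (y - t) 0) as [E|E].
  - replace y with t by lra. rewrite Rminus_diag, Rabs_R0.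
    replace (f t - f t - RtoC 0 * l) with (RtoC 0) by ring. rewrite Cmod_0. lra.
  - specialize (Hb (y - t)%R E Hy). assert (Ey : (t + (y - t))%R = y) by ring.
    now rewrite Ey in Hb.
Qed.

Lemma is_derive_R_bound (f : R -> C) t l : is_Rderive f t l ->
  forall eps, 0 < eps -> exists d, 0 < d /\ forall h, Rabs h < d ->
    Cmod (f (t + h)%R - f t - h * l) <= eps * Rabs h.
Proof.
  intros [_ H] eps He. specialize (H t (fun P HP => HP)).
  destruct (H (mkposreal eps He)) as [d Hd]. exists d. split; [apply cond_pos|].
  intros h Hh. specialize (Hd (t + h)%R). simpl in Hd.
  rewrite !norm_C_R, scal_R_Cmult in Hd.
  change (minus (t + h)%R t) with (t + h - t)%R in Hd.
  replace (t + h - t)%R with h in Hd by ring. apply Hd.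
  change (Rabs (t + h - t) < d). now replace (t + h - t)%R with h by ring.
Qed.

(* Caratheodory's formulation of differentiability: [f (t + h) - f t = h * slope f t l h]
   with the slope continuous at [0]. *)
Definition slope (f : R -> C) (t : R) (l : C) (h : R) : C :=
  if Req_EM_T h 0 then l else (f (t + h)%R - f t) / h.

Definition has_deriv (f : R -> C) (t : R) (l : C) : Prop := ccont (slope f t l) 0.

Lemma slope_0 (f : R -> C) t l : slope f t l 0 = l.
Proof. unfold slope. destruct Req_EM_T; [auto | lra]. Qed.

Lemma slope_eq (f : R -> C) t l h : f (t + h)%R - f t = h * slope f t l h.
Proof.
  unfold slope. destruct Req_EM_T as [->|Hh].
  - rewrite Rplus_0_r. ring.
  - field. now apply RtoC_neq0.
Qed.

Lemma has_deriv_is_derive (f : R -> C) t l : has_deriv f t l -> is_Rderive f t l.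
Proof.
  intros H. apply is_derive_R_of_bound. intros eps He.
  destruct (H eps He) as [d [Hd Hb]]. exists d. split; auto. intros h _ Hh.
  rewrite slope_eq with (l := l).
  replace (h * slope f t l h - h * l) with (h * (slope f t l h - l)) by ring.
  rewrite Cmod_mult, Cmod_R.
  specialize (Hb h). rewrite Rminus_0_r, slope_0 in Hb.
  rewrite Rmult_comm. apply Rmult_le_compat_r; [apply Rabs_pos | left; now apply Hb].
Qed.

Lemma is_derive_has_deriv (f : R -> C) t l : is_Rderive f t l -> has_deriv f t l.
Proof.
  intros H eps He. destruct (is_derive_R_bound f t l H (eps / 2)) as [d [Hd Hb]]; [lra|].
  exists d. split; auto. intros h Hh. rewrite Rminus_0_r in Hh. rewrite slope_0.
  unfold slope. destruct Req_EM_T as [->|Hh0].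
  - replace (l - l) with (RtoC 0) by ring. rewrite Cmod_0. lra.
  - specialize (Hb h Hh). assert (Ha : 0 < Rabs h) by now apply Rabs_pos_lt.
    replace ((f (t + h)%R - f t) / h - l) with ((f (t + h)%R - f t - h * l) / h)
      by (field; now apply RtoC_neq0).
    rewrite Cmod_div, Cmod_R by now apply RtoC_neq0.
    apply Rmult_lt_reg_r with (Rabs h); auto. unfold Rdiv.
    rewrite Rmult_assoc, Rinv_l, Rmult_1_r by lra. nra.
Qed.

Lemma ccont_shift (g : R -> C) t : ccont g t -> ccont (fun h => g (t + h)%R) 0.
Proof.
  intros H e He. destruct (H e He) as [d [Hd Hb]]. exists d. split; auto.
  intros h Hh. rewrite Rplus_0_r. apply Hb. now replace (t + h - t)%R with (h - 0)%R by ring.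
Qed.

Lemma has_deriv_ccont (f : R -> C) t l : has_deriv f t l -> ccont f t.
Proof.
  intros H. apply continuous_ccont, ex_derive_continuous. exists l. now apply has_deriv_is_derive.
Qed.

Lemma has_deriv_const (c : C) t : has_deriv (fun _ => c) t 0.
Proof.
  apply ccont_ext_near with (fun _ => RtoC 0); [|apply ccont_const].
  exists 1%R. split; [lra|]. intros h _. unfold slope. destruct Req_EM_T; auto.
  unfold Rdiv. field. now apply RtoC_neq0.
Qed.

Lemma has_deriv_sub_const (f : R -> C) (c : C) t l :
  has_deriv f t l -> has_deriv (fun x => f x - c) t l.
Proof.
  intros H. apply ccont_ext_near with (slope f t l); auto.
  exists 1%R. split; [lra|]. intros h _. unfold slope. destruct Req_EM_T; auto.
  f_equal. ring.
Qed.

Lemma has_deriv_mult (f g : R -> C) t a b :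
  has_deriv f t a -> has_deriv g t b -> has_deriv (fun x => f x * g x) t (a * g t + f t * b).
Proof.
  intros Hf Hg.
  apply ccont_ext_near with (fun h => slope f t a h * g (t + h)%R + f t * slope g t b h).
  - exists 1%R. split; [lra|]. intros h _. unfold slope. destruct Req_EM_T as [->|Hh].
    + now rewrite Rplus_0_r.
    + field. now apply RtoC_neq0.
  - apply ccont_plus; apply ccont_mult; auto using ccont_const.
    apply ccont_shift, (has_deriv_ccont g t b Hg).
Qed.

Lemma has_deriv_inv (f : R -> C) t a :
  f t <> 0 -> has_deriv f t a -> has_deriv (fun x => / f x) t (- a / (f t * f t)).
Proof.
  intros Hn Hf. pose proof (ccont_shift f t (has_deriv_ccont f t a Hf)) as Hc.
  destruct (Hc (Cmod (f t))) as [r [Hr Hb]]; [now apply Cmod_gt_0|].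
  assert (Hnear : forall h, Rabs (h - 0) < r -> f (t + h)%R <> 0).
  { intros h Hh E. specialize (Hb h Hh). rewrite Rplus_0_r, E in Hb.
    replace (0 - f t) with (- f t) in Hb by ring. rewrite Cmod_opp in Hb. lra. }
  apply ccont_ext_near with (fun h => - slope f t a h / (f (t + h)%R * f t)).
  - exists r. split; auto. intros h Hh. unfold slope. destruct Req_EM_T as [->|Hh0].
    + now rewrite Rplus_0_r.
    + field. repeat split; auto. now apply RtoC_neq0.
  - apply ccont_mult; [now apply ccont_opp|]. apply ccont_inv.
    + rewrite Rplus_0_r. now apply Cmult_neq_0.
    + apply ccont_mult; auto using ccont_const.
Qed.

Lemma has_deriv_sqrt (f F : R -> C) t l :
  (exists r, 0 < r /\ forall x, Rabs (x - t) < r -> f x * f x = F x) ->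
  ccont f t -> f t <> 0 -> has_deriv F t l -> has_deriv f t (l / (2 * f t)).
Proof.
  intros [r [Hr Hsq]] Hc Hn HF. pose proof (ccont_shift f t Hc) as Hc0.
  destruct (Hc0 (Cmod (f t))) as [r' [Hr' Hb]]; [now apply Cmod_gt_0|].
  assert (Hnear : forall h, Rabs (h - 0) < r' -> f (t + h)%R + f t <> 0).
  { intros h Hh E. specialize (Hb h Hh). rewrite Rplus_0_r in Hb.
    replace (f (t + h)%R - f t) with ((f (t + h)%R + f t) - 2 * f t) in Hb by ring.
    rewrite E in Hb. replace (0 - 2 * f t) with (- (2 * f t)) in Hb by ring.
    rewrite Cmod_opp, Cmod_mult, Cmod_R, Rabs_right in Hb by lra.
    pose proof (Cmod_ge_0 (f t)). lra. }
  apply ccont_ext_near with (fun h => slope F t l h / (f (t + h)%R + f t)).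
  - exists (Rmin r r'). split; [now apply Rmin_pos|]. intros h Hh.
    assert (Hr1 : Rabs (h - 0) < r') by (eapply Rlt_le_trans; [exact Hh | apply Rmin_r]).
    assert (Hr2 : Rabs (t + h - t) < r)
      by (replace (t + h - t)%R with (h - 0)%R by ring; eapply Rlt_le_trans; [exact Hh | apply Rmin_l]).
    unfold slope. destruct Req_EM_T as [->|Hh0].
    + rewrite Rplus_0_r. replace (f t + f t) with (2 * f t) by ring. reflexivity.
    + rewrite <- (Hsq (t + h)%R), <- (Hsq t) by (auto; rewrite Rminus_diag, Rabs_R0; lra).
      pose proof (RtoC_neq0 h Hh0). pose proof (Hnear h Hr1). field. now split.
  - apply ccont_mult; auto. apply ccont_inv.
    + rewrite Rplus_0_r. replace (f t + f t) with (2 * f t) by ring.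
      apply Cmult_neq_0; auto. apply RtoC_neq0. lra.
    + apply ccont_plus; auto using ccont_const.
Qed.

Lemma is_Cderive_const (a z : C) : is_Cderive (fun _ => a) z (RtoC 0).
Proof. apply (is_derive_const (K:=C_AbsRing) (V:=C_NormedModule)). Qed.

Lemma is_Cderive_scal (F : C -> C) z a c :
  is_Cderive F z a -> is_Cderive (fun w => c * F w) z (c * a).
Proof.
  intros H.
  pose proof (filterdiff_scal_r_fct (K:=C_AbsRing) (U:=AbsRing_NormedModule C_AbsRing)
     (V:=C_NormedModule) (F:=locally z) c F (fun y => scal y a) Cmult_comm H) as H1.
  apply (filterdiff_ext_lin _ _ _ H1). intros y. simpl.
  change (c * (y * a) = y * (c * a)). ring.
Qed.

Lemma is_Cderive_sumC M (F : nat -> C -> C) (d : nat -> C) z :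
  (forall m, (m < M)%nat -> is_Cderive (F m) z (d m)) ->
  is_Cderive (fun w => sumC M (fun m => F m w)) z (sumC M d).
Proof.
  induction M as [|M IH]; intros H; [apply (is_Cderive_const (RtoC 0))|].
  apply (is_derive_plus (K:=C_AbsRing) (V:=C_NormedModule) (fun w => sumC M (fun m => F m w)) (F M));
    [apply IH; intros|]; apply H; lia.
Qed.

Lemma is_Cderive_RInt_param (G : C -> R -> C) (D : R -> C) z0 r M :
  0 < r -> 0 <= M ->
  (forall z, Cmod (z - z0) < r -> ex_CRInt (G z) 0 1) -> ex_CRInt D 0 1 ->
  (forall h t, Cmod h < r -> 0 <= t <= 1 ->
     Cmod (G (z0 + h) t - G z0 t - h * D t) <= M * Cmod h ^ 2) ->
  is_Cderive (fun z => CRInt (G z) 0 1) z0 (CRInt D 0 1).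
Proof.
  intros Hr HM Hex HD Hb. apply is_derive_C_of_bound. intros eps He.
  exists (Rmin r (eps / (M + 1))). split; [apply Rmin_pos; auto; apply Rdiv_lt_0_compat; lra|].
  intros h Hh Hhd.
  assert (Hh1 : Cmod h < r) by (eapply Rlt_le_trans; [exact Hhd | apply Rmin_l]).
  assert (Hh2 : Cmod h < eps / (M + 1)) by (eapply Rlt_le_trans; [exact Hhd | apply Rmin_r]).
  assert (E1 : ex_CRInt (G (z0 + h)) 0 1) by (apply Hex; now replace (z0 + h - z0) with h by ring).
  assert (E2 : ex_CRInt (G z0) 0 1)
    by (apply Hex; replace (z0 - z0) with (RtoC 0) by ring; now rewrite Cmod_0).
  assert (E3 : ex_CRInt (fun t => G (z0 + h) t - G z0 t) 0 1)
    by now apply (ex_RInt_minus (V:=C_R_NormedModule)).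
  assert (E4 : ex_CRInt (fun t => h * D t) 0 1)
    by (destruct HD as [l Hl]; exists (h * l); now apply is_RInt_Cmult).
  assert (Eq : CRInt (fun t => G (z0 + h) t - G z0 t - h * D t) 0 1
               = CRInt (G (z0 + h)) 0 1 - CRInt (G z0) 0 1 - h * CRInt D 0 1).
  { rewrite (RInt_minus (V:=C_R_CompleteNormedModule) (fun t => G (z0 + h) t - G z0 t)),
      RInt_Cmult by auto.
    now rewrite (RInt_minus (V:=C_R_CompleteNormedModule) (G (z0 + h)) (G z0)) by auto. }
  rewrite <- Eq. eapply Rle_trans.
  { apply Cmod_RInt_le with (M := (M * Cmod h ^ 2)%R);
      [lra | now apply (ex_RInt_minus (V:=C_R_NormedModule)) | auto]. }
  assert (M * Cmod h <= eps).
  { apply Rle_trans with ((M + 1) * (eps / (M + 1)))%R; [|right; field; lra].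
    pose proof (Cmod_ge_0 h). apply Rmult_le_compat; lra. }
  pose proof (Cmod_ge_0 h). nra.
Qed.

Notation pw z k := (@pow_n C_Ring z k : C).

Lemma pown_S (z : C) k : pw z (S k) = z * pw z k.
Proof. reflexivity. Qed.

Lemma pown_mult (x y : C) k : pw (x * y) k = pw x k * pw y k.
Proof. induction k as [|k IH]; [change (RtoC 1 = 1 * 1); ring|]. rewrite !pown_S, IH. ring. Qed.

Lemma pown_neq0 (x : C) k : x <> 0 -> pw x k <> 0.
Proof.
  intros H. induction k as [|k IH]; [apply C1_nz|]. rewrite pown_S. now apply Cmult_neq_0.
Qed.

Lemma zpowC_mult (x y : C) p : x <> 0 -> y <> 0 -> zpowC (x * y) p = zpowC x p * zpowC y p.
Proof.
  intros Hx Hy. destruct p; simpl; [ring | apply pown_mult |].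
  rewrite pown_mult. field. split; now apply pown_neq0.
Qed.

Lemma zpowC_succ (x : C) p : x <> 0 -> zpowC x (p + 1) = zpowC x p * x.
Proof.
  intros Hx. destruct p as [|q|q].
  - simpl. change (x * 1 = 1 * x). ring.
  - replace (Z.pos q + 1)%Z with (Z.pos (Pos.succ q)) by lia. unfold zpowC.
    rewrite Pos2Nat.inj_succ, pown_S. ring.
  - destruct (Pos.eq_dec q 1) as [->|Hq].
    + simpl. change (RtoC 1 = / (x * 1) * x). field. auto.
    + replace (Z.neg q + 1)%Z with (Z.neg (Pos.pred q))
        by (rewrite <- (Pos.succ_pred q) at 1 by auto; rewrite <- Pos.add_1_r; lia).
      unfold zpowC. rewrite <- (Pos.succ_pred q) at 2 by auto.
      rewrite Pos2Nat.inj_succ, pown_S. field. split; auto. now apply pown_neq0.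
Qed.

Lemma zpowC_sub2 (x : C) p : x <> 0 -> zpowC x (p - 2) = zpowC x p / (x * x).
Proof.
  intros Hx. replace p with (p - 2 + 1 + 1)%Z at 2 by lia. rewrite !zpowC_succ by auto.
  field. auto.
Qed.

Lemma cont01_zpowC (f : R -> C) p :
  (forall t, 0 <= t <= 1 -> f t <> 0) -> cont01 f -> cont01 (fun x => zpowC (f x) p).
Proof.
  intros Hn Hf.
  assert (Hpow : forall k, cont01 (fun x => pw (f x) k)).
  { induction k as [|k IH]; [apply (cont01_const (RtoC 1)) | now apply cont01_mult]. }
  destruct p; [apply (cont01_const (RtoC 1)) | apply Hpow |].
  apply (cont01_inv (fun x => pw (f x) (Pos.to_nat p))); [|apply Hpow].
  intros t Ht. now apply pown_neq0, Hn.
Qed.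

Lemma has_deriv_zpowC (f : R -> C) t a p : f t <> 0 -> has_deriv f t a ->
  has_deriv (fun x => zpowC (f x) p) t (IZR p * zpowC (f t) p / f t * a).
Proof.
  intros Hn Hf.
  assert (Hpow : forall k, has_deriv (fun x => pw (f x) k) t (INR k * pw (f t) k / f t * a)).
  { induction k as [|k IH].
    - replace (INR 0 * pw (f t) 0 / f t * a) with (RtoC 0) by (simpl; field; auto).
      apply (has_deriv_const (RtoC 1)).
    - replace (INR (S k) * pw (f t) (S k) / f t * a)
        with (a * pw (f t) k + f t * (INR k * pw (f t) k / f t * a))
        by (rewrite S_INR, RtoC_plus, pown_S; field; auto).
      now apply (has_deriv_mult f (fun x => pw (f x) k)). }
  destruct p as [|q|q]; simpl zpowC.
  - replace (IZR 0 * 1 / f t * a) with (RtoC 0) by (simpl; field; auto).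
    apply (has_deriv_const (RtoC 1)).
  - rewrite <- positive_nat_Z, <- INR_IZR_INZ. apply Hpow.
  - replace (IZR (Z.neg q) * / pw (f t) (Pos.to_nat q) / f t * a)
      with (- (INR (Pos.to_nat q) * pw (f t) (Pos.to_nat q) / f t * a)
            / (pw (f t) (Pos.to_nat q) * pw (f t) (Pos.to_nat q)))
      by (rewrite <- Pos2Z.opp_pos, opp_IZR, <- positive_nat_Z, <- INR_IZR_INZ, RtoC_opp;
          field; split; auto; now apply pown_neq0).
    apply (has_deriv_inv (fun x => pw (f x) (Pos.to_nat q))); [now apply pown_neq0 | apply Hpow].
Qed.

Lemma pown_taylor (q : nat) : exists B, 0 < B /\ forall e : C, Cmod e <= 1/2 ->
  Cmod (pw (1 + e) q - 1 - INR q * e) <= B * Cmod e ^ 2 /\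
  Cmod (pw (1 + e) q - 1) <= B * Cmod e /\
  / B <= Cmod (pw (1 + e) q).
Proof.
  induction q as [|q [B [HB IH]]].
  - exists 1%R. split; [lra|]. intros e He.
    change (pw (1 + e) 0) with (RtoC 1). change (INR 0) with 0%R.
    replace (1 - 1 - 0 * e) with (RtoC 0) by ring. replace (1 - 1) with (RtoC 0) by ring.
    rewrite Cmod_0, Cmod_1, Rinv_1.
    pose proof (Cmod_ge_0 e). repeat split; nra.
  - pose proof (pos_INR q) as Hq. exists (2 * B + INR q + 1)%R. split; [lra|].
    intros e He. destruct (IH e He) as [H1 [H2 H3]].
    set (P := pw (1 + e) q) in *. rewrite pown_S. fold P.
    assert (E1 : Cmod (1 + e) <= 3/2)
      by (pose proof (Cmod_triangle 1 e); rewrite Cmod_1 in *; lra).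
    assert (E2 : 1/2 <= Cmod (1 + e)).
    { pose proof (Cmod_triangle_rev 1 (- e)). rewrite Cmod_1, Cmod_opp in H.
      replace (1 - - e) with (1 + e) in H by ring. lra. }
    pose proof (Cmod_ge_0 e). pose proof (Cmod_ge_0 (1 + e)). repeat split.
    + replace ((1 + e) * P - 1 - INR (S q) * e)
        with ((1 + e) * (P - 1 - INR q * e) + INR q * (e * e))
        by (rewrite S_INR, RtoC_plus; ring).
      eapply Rle_trans; [apply Cmod_triangle|].
      rewrite !Cmod_mult, Cmod_R, Rabs_right by lra.
      assert (Cmod (1 + e) * Cmod (P - 1 - INR q * e) <= 3/2 * (B * Cmod e ^ 2))
        by (apply Rmult_le_compat; auto using Cmod_ge_0).
      nra.
    + replace ((1 + e) * P - 1) with ((1 + e) * (P - 1) + e) by ring.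
      eapply Rle_trans; [apply Cmod_triangle|]. rewrite Cmod_mult.
      assert (Cmod (1 + e) * Cmod (P - 1) <= 3/2 * (B * Cmod e))
        by (apply Rmult_le_compat; auto using Cmod_ge_0).
      nra.
    + rewrite Cmod_mult. apply Rle_trans with (1/2 * / B)%R.
      * apply Rle_trans with (/ (2 * B))%R; [apply Rinv_le_contravar; lra|].
        rewrite Rinv_mult. lra.
      * apply Rmult_le_compat; try lra. apply Rlt_le, Rinv_0_lt_compat; lra.
Qed.

Lemma zpowC_taylor (p : Z) : exists M, 0 <= M /\ forall e : C, Cmod e <= 1/2 ->
  Cmod (zpowC (1 + e) p - 1 - IZR p * e) <= M * Cmod e ^ 2.
Proof.
  destruct p as [|q|q].
  - exists 0%R. split; [lra|]. intros e _. simpl.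
    replace (1 - 1 - 0 * e) with (RtoC 0) by ring. rewrite Cmod_0. lra.
  - destruct (pown_taylor (Pos.to_nat q)) as [B [HB H]]. exists B. split; [lra|].
    intros e He. unfold zpowC.
    replace (IZR (Z.pos q)) with (INR (Pos.to_nat q)) by now rewrite INR_IZR_INZ, positive_nat_Z.
    apply (H e He).
  - destruct (pown_taylor (Pos.to_nat q)) as [B [HB H]]. set (m := Pos.to_nat q).
    pose proof (pos_INR m) as Hm.
    exists (B * (B + INR m * B))%R. split; [nra|]. intros e He.
    destruct (H e He) as [H1 [H2 H3]]. fold m in H1, H2, H3.
    unfold zpowC. fold m. set (P := pw (1 + e) m) in *.
    replace (IZR (Z.neg q)) with (- INR m)%R
      by (now rewrite <- Pos2Z.opp_pos, opp_IZR, <- positive_nat_Z, <- INR_IZR_INZ).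
    assert (HPn : P <> 0) by (intro E; rewrite E, Cmod_0 in H3; pose proof (Rinv_0_lt_compat B HB); lra).
    replace (/ P - 1 - RtoC (- INR m) * e)
      with ((INR m * e * (P - 1) - (P - 1 - INR m * e)) * / P) by (rewrite RtoC_opp; field; auto).
    assert (HiP : / Cmod P <= B).
    { rewrite <- (Rinv_inv B). apply Rinv_le_contravar; auto. now apply Rinv_0_lt_compat. }
    assert (Hnum : Cmod (INR m * e * (P - 1) - (P - 1 - INR m * e)) <= (B + INR m * B) * Cmod e ^ 2).
    { eapply Rle_trans; [apply Cmod_sub_le|]. rewrite !Cmod_mult, Cmod_R, Rabs_right by lra.
      pose proof (Cmod_ge_0 e).
      assert (INR m * Cmod e * Cmod (P - 1) <= INR m * Cmod e * (B * Cmod e))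
        by (apply Rmult_le_compat_l; auto; apply Rmult_le_pos; auto).
      nra. }
    rewrite Cmod_mult, Cmod_inv by auto.
    replace (B * (B + INR m * B) * Cmod e ^ 2)%R with ((B + INR m * B) * Cmod e ^ 2 * B)%R by ring.
    apply Rmult_le_compat; auto using Cmod_ge_0.
    apply Rlt_le, Rinv_0_lt_compat, Cmod_gt_0, HPn.
Qed.

Lemma zpowC_sqrt_taylor (p : Z) : exists M, 0 <= M /\ forall q w : C,
  q * q = 1 + w -> 0 < Re q -> Cmod w <= 1/2 ->
  Cmod (zpowC q p - 1 - IZR p * w / 2) <= M * Cmod w ^ 2.
Proof.
  destruct (zpowC_taylor p) as [M [HM H]]. exists (M + Cmod (IZR p))%R.
  split; [pose proof (Cmod_ge_0 (IZR p)); lra|]. intros q w Hqw Hre Hw.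
  assert (Hw' : w = q * q - 1) by (rewrite Hqw; ring).
  set (e := q - 1).
  assert (He : Cmod e <= Cmod w).
  { replace w with (e * (q + 1)) by (rewrite Hw'; unfold e; ring).
    rewrite Cmod_mult.
    assert (1 <= Cmod (q + 1)).
    { eapply Rle_trans; [|apply re_le_Cmod]. rewrite re_plus, re_RtoC, Rabs_right; lra. }
    pose proof (Cmod_ge_0 e). nra. }
  pose proof (Cmod_ge_0 e). pose proof (Cmod_ge_0 (IZR p)).
  replace q with (1 + e) by (unfold e; ring).
  (* [e - w/2 = - e^2/2] since [(1 + e)^2 = 1 + w] *)
  replace (zpowC (1 + e) p - 1 - IZR p * w / 2)
    with ((zpowC (1 + e) p - 1 - IZR p * e) + IZR p * (- (e * e) / 2))
    by (replace w with (2 * e + e * e) by (rewrite Hw'; unfold e; ring); field).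
  eapply Rle_trans; [apply Cmod_triangle|].
  rewrite Cmod_mult, Cmod_div, Cmod_opp, Cmod_mult by (apply RtoC_neq0; lra).
  replace (Cmod 2) with 2%R by (rewrite Cmod_R, Rabs_right; lra).
  assert (Cmod e ^ 2 <= Cmod w ^ 2) by (apply pow_incr; lra).
  pose proof (H e ltac:(lra)).
  assert (Cmod (IZR p) * (Cmod e * Cmod e / 2) <= Cmod (IZR p) * Cmod w ^ 2)
    by (apply Rmult_le_compat_l; nra).
  nra.
Qed.

(** * Moving one branch point *)

Lemma upd_same u k : upd u k (u k) = u.
Proof.
  apply functional_extensionality. intros i. unfold upd. now destruct (Nat.eqb_spec i k); subst.
Qed.

Lemma upd_eq u k z : upd u k z k = z.
Proof. unfold upd. now rewrite Nat.eqb_refl. Qed.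

Lemma upd_neq u k z j : j <> k -> upd u k z j = u j.
Proof. intros. unfold upd. now destruct (Nat.eqb_spec j k). Qed.

Lemma openN_upd N U u k : openN N U -> U u -> (k < N)%nat ->
  exists r, 0 < r /\ forall z, Cmod (z - u k) < r -> U (upd u k z).
Proof.
  intros HU Hu Hk. destruct (HU u Hu) as [e [He H]]. exists e. split; auto.
  intros z Hz. apply H. intros i Hi. unfold upd. destruct (Nat.eqb_spec i k); subst; auto.
  replace (u i - u i) with (RtoC 0) by ring. now rewrite Cmod_0.
Qed.

Lemma branchpoly_S N u x : branchpoly (S N) u x = branchpoly N u x * (x - u N).
Proof. reflexivity. Qed.

Lemma branchpoly_neq0 N u x : (forall i, (i < N)%nat -> x <> u i) -> branchpoly N u x <> 0.
Proof.
  induction N as [|N IH]; intros H; [apply C1_nz|]. rewrite branchpoly_S.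
  apply Cmult_neq_0; [apply IH; intros; apply H; lia | apply Cminus_eq_contra, H; lia].
Qed.

Lemma branchpoly_upd N u k z x : (k < N)%nat ->
  branchpoly N (upd u k z) x * (x - u k) = branchpoly N u x * (x - z).
Proof.
  assert (Hge : forall M, (M <= k)%nat -> branchpoly M (upd u k z) x = branchpoly M u x).
  { induction M; intros; [reflexivity|]. rewrite !branchpoly_S, IHM, upd_neq by lia. reflexivity. }
  induction N as [|N IH]; intros Hk; [lia|]. rewrite !branchpoly_S.
  destruct (Nat.eq_dec k N) as [->|Hkn].
  - rewrite Hge, upd_eq by lia. ring.
  - rewrite upd_neq by lia.
    transitivity (branchpoly N (upd u k z) x * (x - u k) * (x - u N)); [ring|].
    rewrite IH by lia. ring.
Qed.

Lemma has_deriv_branchpoly N u (s : R -> C) t a :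
  (forall i, (i < N)%nat -> s t <> u i) -> has_deriv s t a ->
  has_deriv (fun x => branchpoly N u (s x)) t
    (branchpoly N u (s t) * (a * sumC N (fun i => / (s t - u i)))).
Proof.
  intros Hav Hs. induction N as [|N IH].
  - replace (branchpoly 0 u (s t) * (a * sumC 0 (fun i => / (s t - u i)))) with (RtoC 0)
      by (simpl; ring).
    apply (has_deriv_const (RtoC 1)).
  - assert (Hn : s t - u N <> 0) by (apply Cminus_eq_contra, Hav; lia).
    replace (branchpoly (S N) u (s t) * (a * sumC (S N) (fun i => / (s t - u i))))
      with (branchpoly N u (s t) * (a * sumC N (fun i => / (s t - u i))) * (s t - u N)
            + branchpoly N u (s t) * a) by (simpl; field; auto).
    apply (has_deriv_mult (fun x => branchpoly N u (s x)) (fun x => s x - u N)).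
    + apply IH. intros; apply Hav; lia.
    + now apply has_deriv_sub_const.
Qed.

(* [W l / W0] squares to [1 - l c], whose real part is positive, so it never crosses the
   imaginary axis. *)
Lemma sqrt_path_Re_pos (W : R -> C) (W0 c : C) :
  W0 <> 0 -> Cmod c <= 1/2 -> cont01 W ->
  (forall l, 0 <= l <= 1 -> W l * W l = W0 * W0 * (1 - l * c)) ->
  W 0%R = W0 -> 0 < Re (W 1%R / W0).
Proof.
  intros HW0 Hc Hcont Hsq H0.
  assert (Hnz : forall l, 0 <= l <= 1 -> Re (W l / W0) <> 0%R).
  { intros l Hl E. set (q := W l / W0) in E.
    assert (Hq : q * q = 1 - l * c)
      by (unfold q; replace (W l / W0 * (W l / W0)) with (W l * W l / (W0 * W0)) by (field; auto);
          rewrite Hsq by auto; field; auto).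
    assert (Hre : Re (q * q) = (- Im q ^ 2)%R) by (rewrite re_mult, E; ring).
    rewrite Hq in Hre. unfold Cminus in Hre. rewrite re_plus, re_opp, re_RtoC in Hre.
    pose proof (re_le_Cmod (l * c)) as Hlc.
    rewrite Cmod_mult, Cmod_R, (Rabs_right l) in Hlc by lra.
    pose proof (Cmod_ge_0 c). pose proof (pow2_ge_0 (Im q)).
    assert (Rabs (Re (l * c)) <= 1/2) by nra.
    unfold Rabs in *. destruct Rcase_abs; lra. }
  set (g := fun x => Re (W (clamp01 x) / W0)).
  assert (Hg : forall a, continuity_pt g a)
    by (intros a; exact (ccont_Re _ a (cont01_mult W (fun _ => / W0) Hcont (cont01_const _) a))).
  assert (g0 : g 0%R = 1%R).
  { unfold g. rewrite clamp01_id, H0 by lra. replace (W0 / W0) with (RtoC 1) by (field; auto).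
    apply re_RtoC. }
  assert (g1 : g 1%R = Re (W 1%R / W0)) by (unfold g; now rewrite clamp01_id by lra).
  destruct (Rlt_le_dec 0 (Re (W 1%R / W0))) as [Hp|Hn]; auto. exfalso.
  destruct (Req_dec (Re (W 1%R / W0)) 0) as [E|E]; [apply (Hnz 1%R); auto; lra|].
  destruct (IVT_interv (fun x => - g x)%R 0 1) as [z [Hz Hgz]];
    [intros a _; now apply continuity_pt_opp | lra | rewrite g0; lra | rewrite g1; lra |].
  apply (Hnz z Hz). unfold g in Hgz. rewrite clamp01_id in Hgz by auto. lra.
Qed.

(** * Derivatives of the period integrals *)

Definition jcont N (U : (nat -> C) -> Prop) (W : (nat -> C) -> R -> C) : Prop :=
  forall u t, U u -> 0 <= t <= 1 -> forall eps, 0 < eps -> exists delta, 0 < delta /\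
    forall u' t', U u' -> 0 <= t' <= 1 ->
      (forall i, (i < N)%nat -> Cmod (u' i - u i) < delta) ->
      Rabs (t' - t) < delta -> Cmod (W u' t' - W u t) < eps.

Section Cycle.

Variables (N : nat) (n : Z) (U : (nat -> C) -> Prop) (s s' : R -> C) (W : (nat -> C) -> R -> C).

Hypothesis U_open : openN N U.
Hypothesis s_deriv : forall t, is_Rderive s t (s' t).
Hypothesis s'_cont : forall t, continuous s' t.
Hypothesis s_avoids : forall u t i, U u -> 0 <= t <= 1 -> (i < N)%nat -> s t <> u i.
Hypothesis W_sq : forall u t, U u -> 0 <= t <= 1 -> W u t * W u t = branchpoly N u (s t).
Hypothesis W_cont : jcont N U W.
Hypothesis s_closed : s 0%R = s 1%R.
Hypothesis W_closed : forall u, U u -> W u 0%R = W u 1%R.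

Definition integrand (u : nat -> C) (j : nat) (t : R) : C :=
  zpowC (W u t) n / (s t - u j) * s' t.

Lemma cyc_int_integrand u j :
  cyc_int s s' (W u) (fun x v => zpowC v n / (x - u j)) = CRInt (integrand u j) 0 1.
Proof. reflexivity. Qed.

(* The [u_k]-derivative of [integrand u j]: on the curve, [v^n] varies like [(x - u_k)^(n/2)]. *)
Definition dintegrand (u : nat -> C) (k j : nat) (t : R) : C :=
  zpowC (W u t) n / (s t - u k) * s' t *
  (- IZR n / 2 * / (s t - u j) + (if Nat.eqb j k then / (s t - u k) else 0)).

Lemma W_neq0 u t : U u -> 0 <= t <= 1 -> W u t <> 0.
Proof.
  intros Hu Ht E. apply (branchpoly_neq0 N u (s t)); [intros; now apply s_avoids|].
  rewrite <- W_sq, E by auto. ring.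
Qed.

Lemma W_cont01 u : U u -> cont01 (W u).
Proof.
  intros Hu. apply cont01_intro. intros t Ht e He.
  destruct (W_cont u t Hu Ht e He) as [d [Hd Hb]]. exists d. split; auto.
  intros t' Ht' Htt. apply Hb; auto. intros i _.
  replace (u i - u i) with (RtoC 0) by ring. now rewrite Cmod_0.
Qed.

Lemma s_ccont t : ccont s t.
Proof. apply continuous_ccont, ex_derive_continuous. exists (s' t). apply s_deriv. Qed.

Lemma inv_s_sub_cont01 u i : U u -> (i < N)%nat -> cont01 (fun t => / (s t - u i)).
Proof.
  intros Hu Hi. apply cont01_inv.
  - intros t Ht. now apply Cminus_eq_contra, s_avoids.
  - apply cont01_minus; [apply cont01_of_ccont, s_ccont | apply cont01_const].
Qed.

Lemma integrand_cont01 u j : U u -> (j < N)%nat -> cont01 (integrand u j).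
Proof.
  intros Hu Hj. unfold integrand. repeat apply cont01_mult.
  - apply cont01_zpowC; [intros; now apply W_neq0 | now apply W_cont01].
  - now apply inv_s_sub_cont01.
  - apply cont01_of_ccont. intros t. now apply continuous_ccont.
Qed.

Lemma dintegrand_cont01 u k j : U u -> (k < N)%nat -> (j < N)%nat -> cont01 (dintegrand u k j).
Proof.
  intros Hu Hk Hj. apply cont01_mult; [exact (integrand_cont01 u k Hu Hk)|].
  apply cont01_plus; [apply cont01_mult; [apply cont01_const | now apply inv_s_sub_cont01]|].
  destruct (Nat.eqb j k); [now apply inv_s_sub_cont01 | apply cont01_const].
Qed.

(* Moving [u_k] to [u_k + h] multiplies [v] by a square root [q] of [1 - h / (x - u_k)];
   continuity along the segment picks the root near 1. *)
Lemma W_upd_ratio u k t h : U u -> (k < N)%nat -> 0 <= t <= 1 ->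
  (forall l, 0 <= l <= 1 -> U (upd u k (u k + l * h))) -> Cmod (h / (s t - u k)) <= 1/2 ->
  let q := W (upd u k (u k + h)) t / W u t in
  q * q = 1 - h / (s t - u k) /\ 0 < Re q.
Proof.
  intros Hu Hk Ht HUh Hc q.
  set (d := s t - u k) in *. assert (Hd : d <> 0) by now apply Cminus_eq_contra, s_avoids.
  assert (HW0 : W u t <> 0) by now apply W_neq0.
  set (path := fun l : R => W (upd u k (u k + l * h)) t).
  assert (Hpath : forall l, 0 <= l <= 1 -> path l * path l = W u t * W u t * (1 - l * (h / d))).
  { intros l Hl. unfold path. rewrite !W_sq by auto.
    pose proof (branchpoly_upd N u k (u k + l * h) (s t) Hk) as E. fold d in E.
    replace (branchpoly N (upd u k (u k + l * h)) (s t))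
      with (branchpoly N u (s t) * (s t - (u k + l * h)) / d) by (rewrite <- E; field; auto).
    unfold d. field. auto. }
  assert (Hq : q * q = 1 - h / d).
  { unfold q. replace (u k + h) with (u k + 1%R * h) by ring. fold (path 1%R).
    replace (path 1%R / W u t * (path 1%R / W u t)) with (path 1%R * path 1%R / (W u t * W u t))
      by (field; auto).
    rewrite Hpath by lra. field. now split. }
  split; auto. unfold q. replace (u k + h) with (u k + 1%R * h) by ring.
  apply (sqrt_path_Re_pos path (W u t) (h / d)); auto.
  - apply cont01_intro. intros l Hl e He.
    destruct (W_cont (upd u k (u k + l * h)) t (HUh l Hl) Ht e He) as [dl [Hdl Hb]].
    exists (dl / (Cmod h + 1))%R. pose proof (Cmod_ge_0 h).
    split; [apply Rdiv_lt_0_compat; lra|]. intros l' Hl' Hll'. apply Hb; auto.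
    + intros i Hi. unfold upd. destruct (Nat.eqb i k).
      * replace (u k + l' * h - (u k + l * h)) with ((l' - l)%R * h) by (rewrite RtoC_minus; ring).
        rewrite Cmod_mult, Cmod_R. pose proof (Rabs_pos (l' - l)).
        apply Rle_lt_trans with (Rabs (l' - l) * (Cmod h + 1))%R; [nra|].
        apply Rlt_le_trans with (dl / (Cmod h + 1) * (Cmod h + 1))%R;
          [apply Rmult_lt_compat_r; lra | right; field; lra].
      * replace (u i - u i) with (RtoC 0) by ring. now rewrite Cmod_0.
    + now rewrite Rminus_diag, Rabs_R0.
  - unfold path. replace (u k + 0%R * h) with (u k) by ring. now rewrite upd_same.
Qed.
Lemma integrand_upd_increment u k j t (h q : C) : U u -> (k < N)%nat -> (j < N)%nat -> 0 <= t <= 1 ->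
  q <> 0 -> q * q = 1 - h / (s t - u k) -> W (upd u k (u k + h)) t = W u t * q ->
  let p := if Nat.eqb j k then (n - 2)%Z else n in
  integrand (upd u k (u k + h)) j t - integrand u j t - h * dintegrand u k j t
  = integrand u j t * (zpowC q p - 1 - IZR p * - (h / (s t - u k)) / 2).
Proof.
  intros Hu Hk Hj Ht Hq0 Hq HWq p. unfold integrand, dintegrand, p.
  set (d := s t - u k). assert (Hd : d <> 0) by now apply Cminus_eq_contra, s_avoids.
  assert (HW0 : W u t <> 0) by now apply W_neq0.
  rewrite HWq, zpowC_mult by auto.
  destruct (Nat.eqb_spec j k) as [->|Hjk].
  - rewrite upd_eq, zpowC_sub2, minus_IZR, RtoC_minus by auto. fold d.
    assert (Eh : h = d * (1 - q * q)) by (rewrite Hq; unfold d; field; auto).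
    replace (s t - (u k + h)) with (d * (q * q)) by (rewrite Eh; unfold d; ring).
    rewrite Eh. field. now split.
  - rewrite upd_neq by auto. assert (s t - u j <> 0) by now apply Cminus_eq_contra, s_avoids.
    field. now split.
Qed.

Lemma integrand_increment_bound u k j : U u -> (k < N)%nat -> (j < N)%nat ->
  exists r M, 0 < r /\ 0 <= M /\ forall h t, Cmod h < r -> 0 <= t <= 1 ->
    Cmod (integrand (upd u k (u k + h)) j t - integrand u j t - h * dintegrand u k j t)
      <= M * Cmod h ^ 2.
Proof.
  intros Hu Hk Hj.
  destruct (openN_upd N U u k U_open Hu Hk) as [eo [Heo HUo]].
  destruct (cont01_bounded_below (fun t => s t - u k)) as [rho [Hrho Hrhob]].
  { apply cont01_minus; [apply cont01_of_ccont, s_ccont | apply cont01_const]. }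
  { intros t Ht. now apply Cminus_eq_contra, s_avoids. }
  destruct (cont01_bounded (integrand u j) (integrand_cont01 u j Hu Hj)) as [BK [HBK HBKb]].
  destruct (zpowC_sqrt_taylor (if Nat.eqb j k then (n - 2)%Z else n)) as [Mp [HMp HMpb]].
  exists (Rmin eo (rho / 2)), (BK * Mp / (rho * rho))%R.
  split; [apply Rmin_pos; lra|].
  split; [apply Rmult_le_pos; [nra | apply Rlt_le, Rinv_0_lt_compat; nra]|].
  intros h t Hh Ht.
  assert (Hh1 : Cmod h < eo) by (eapply Rlt_le_trans; [exact Hh | apply Rmin_l]).
  assert (Hh2 : Cmod h < rho / 2) by (eapply Rlt_le_trans; [exact Hh | apply Rmin_r]).
  pose proof (Cmod_ge_0 h).
  set (d := s t - u k). assert (Hd : rho <= Cmod d) by now apply Hrhob.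
  assert (Hdn : d <> 0) by (intro E; rewrite E, Cmod_0 in Hd; lra).
  assert (Hc : Cmod (h / d) <= 1/2).
  { rewrite Cmod_div by auto. apply Rle_trans with (rho / 2 / rho)%R; [|right; field; lra].
    apply Rmult_le_compat; try lra; [apply Rlt_le, Rinv_0_lt_compat; lra|].
    apply Rinv_le_contravar; lra. }
  assert (HUh : forall l, 0 <= l <= 1 -> U (upd u k (u k + l * h))).
  { intros l Hl. apply HUo. replace (u k + l * h - u k) with (l * h) by ring.
    rewrite Cmod_mult, Cmod_R, Rabs_right by lra. nra. }
  destruct (W_upd_ratio u k t h Hu Hk Ht HUh Hc) as [Hq Hre].
  set (q := W (upd u k (u k + h)) t / W u t) in *.
  assert (Hq0 : q <> 0) by (intro E; rewrite E in Hre; simpl in Hre; lra).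
  assert (HWq : W (upd u k (u k + h)) t = W u t * q) by (unfold q; field; now apply W_neq0).
  rewrite (integrand_upd_increment u k j t h q) by auto.
  rewrite Cmod_mult. apply Rle_trans with (BK * (Mp * Cmod (- (h / d)) ^ 2))%R.
  - apply Rmult_le_compat; auto using Cmod_ge_0.
    apply HMpb; [now replace (1 + - (h / d)) with (1 - h / d) by ring | auto | now rewrite Cmod_opp].
  - rewrite Cmod_opp, Cmod_div by auto.
    replace (BK * Mp / (rho * rho) * Cmod h ^ 2)%R with (BK * (Mp * (Cmod h / rho) ^ 2))%R
      by (field; lra).
    apply Rmult_le_compat_l; [lra|]. apply Rmult_le_compat_l; [lra|]. apply pow_incr. split.
    + apply Rmult_le_pos; [lra | apply Rlt_le, Rinv_0_lt_compat; lra].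
    + apply Rmult_le_compat_l; [lra|]. apply Rinv_le_contravar; lra.
Qed.

Lemma integral_deriv u k j : U u -> (k < N)%nat -> (j < N)%nat ->
  is_Cderive (fun z => cyc_int s s' (W (upd u k z)) (fun x v => zpowC v n / (x - upd u k z j)))
    (u k) (CRInt (dintegrand u k j) 0 1).
Proof.
  intros Hu Hk Hj.
  destruct (integrand_increment_bound u k j Hu Hk Hj) as [r [M [Hr [HM Hb]]]].
  destruct (openN_upd N U u k U_open Hu Hk) as [eo [Heo HUo]].
  apply (is_Cderive_RInt_param (fun z => integrand (upd u k z) j) _ _ (Rmin r eo) M);
    [now apply Rmin_pos | auto | | |].
  - intros z Hz. apply ex_RInt_cont01, integrand_cont01; auto.
    apply HUo. eapply Rlt_le_trans; [exact Hz | apply Rmin_r].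
  - now apply ex_RInt_cont01, dintegrand_cont01.
  - intros h t Hh Ht. rewrite upd_same. apply Hb; auto.
    eapply Rlt_le_trans; [exact Hh | apply Rmin_l].
Qed.
Lemma has_deriv_primitive u k t : U u -> (k < N)%nat -> 0 < t < 1 ->
  has_deriv (fun x => zpowC (W u x) n / (s x - u k)) t
    (zpowC (W u t) n / (s t - u k) * s' t *
     (IZR n / 2 * sumC N (fun i => / (s t - u i)) - / (s t - u k))).
Proof.
  intros Hu Hk Ht. assert (Ht' : 0 <= t <= 1) by lra.
  set (S := sumC N (fun i => / (s t - u i))).
  assert (HW0 : W u t <> 0) by now apply W_neq0.
  assert (Hd : s t - u k <> 0) by now apply Cminus_eq_contra, s_avoids.
  assert (Hs : has_deriv s t (s' t)) by apply is_derive_has_deriv, s_deriv.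
  assert (HW : has_deriv (W u) t (branchpoly N u (s t) * (s' t * S) / (2 * W u t))).
  { apply (has_deriv_sqrt (W u) (fun x => branchpoly N u (s x))); auto.
    - exists (Rmin t (1 - t)). split; [apply Rmin_pos; lra|]. intros x Hx.
      apply W_sq; auto. pose proof (Rmin_l t (1 - t)). pose proof (Rmin_r t (1 - t)).
      unfold Rabs in Hx. destruct Rcase_abs in Hx; lra.
    - apply cont01_interior; [now apply W_cont01 | auto].
    - exact (has_deriv_branchpoly N u s t (s' t) (fun i Hi => s_avoids u t i Hu Ht' Hi) Hs). }
  pose proof (has_deriv_mult _ _ t _ _ (has_deriv_zpowC (W u) t _ n HW0 HW)
     (has_deriv_inv (fun x => s x - u k) t (s' t) Hd (has_deriv_sub_const s (u k) t (s' t) Hs)))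
    as Hprod.
  match type of Hprod with has_deriv _ _ ?l => replace (_ * (_ - _)) with l; [exact Hprod|] end.
  rewrite <- (W_sq u t) by auto. field. now split.
Qed.

Lemma sum_dintegrand u k : U u -> (k < N)%nat ->
  sumC N (fun j => CRInt (dintegrand u k j) 0 1) = 0.
Proof.
  intros Hu Hk. set (f := fun x => zpowC (W u x) n / (s x - u k)).
  rewrite <- RInt_sumC by (intros; now apply ex_RInt_cont01, dintegrand_cont01).
  assert (Hf : cont01 f).
  { apply cont01_mult; [|now apply inv_s_sub_cont01].
    apply cont01_zpowC; [intros; now apply W_neq0 | now apply W_cont01]. }
  assert (Hdf : cont01 (fun t => - sumC N (fun j => dintegrand u k j t))).
  { intros t. apply ccont_opp. apply (cont01_sumC N (dintegrand u k)).
    intros; now apply dintegrand_cont01. }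
  (* The integrand is minus the derivative of [v^n / (x - u_k)], a single-valued function on
     the closed cycle. *)
  assert (Hprim : CRInt (fun t => - sumC N (fun j => dintegrand u k j t)) 0 1 = f 1%R - f 0%R).
  { apply RInt_derive_interior; auto. intros t Ht. apply has_deriv_is_derive.
    replace (- sumC N (fun j => dintegrand u k j t))
      with (zpowC (W u t) n / (s t - u k) * s' t *
            (IZR n / 2 * sumC N (fun i => / (s t - u i)) - / (s t - u k)));
      [now apply has_deriv_primitive|].
    unfold dintegrand. rewrite sumC_scal, sumC_plus, sumC_scal, sumC_indicator by auto.
    field. now apply Cminus_eq_contra, s_avoids; [| lra |]. }
  assert (Hclosed : f 1%R = f 0%R) by (unfold f; now rewrite W_closed, s_closed).
  rewrite (RInt_ext (V:=C_R_CompleteNormedModule) _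
             (fun t => RtoC (-1) * - sumC N (fun j => dintegrand u k j t)))
    by (intros; match goal with |- ?a = ?b => change (@eq C a b) end; ring).
  rewrite RInt_Cmult, Hprim, Hclosed by now apply ex_RInt_cont01. ring.
Qed.

Lemma dintegrand_offdiag u k j : U u -> (k < N)%nat -> (j < N)%nat -> k <> j -> u k <> u j ->
  CRInt (dintegrand u k j) 0 1
  = (- IZR n / 2) / (u k - u j) * (CRInt (integrand u k) 0 1 - CRInt (integrand u j) 0 1).
Proof.
  intros Hu Hk Hj Hkj Hukj.
  pose proof (integrand_cont01 u k Hu Hk) as Ik. pose proof (integrand_cont01 u j Hu Hj) as Ij.
  rewrite <- (RInt_minus (V:=C_R_CompleteNormedModule)) by now apply ex_RInt_cont01.
  rewrite <- RInt_Cmult by (apply (ex_RInt_minus (V:=C_R_NormedModule)); now apply ex_RInt_cont01).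
  apply (RInt_ext (V:=C_R_CompleteNormedModule)). intros x Hx.
  rewrite Rmin_left, Rmax_right in Hx by lra.
  assert (s x - u k <> 0) by (apply Cminus_eq_contra, s_avoids; auto; lra).
  assert (s x - u j <> 0) by (apply Cminus_eq_contra, s_avoids; auto; lra).
  unfold dintegrand, integrand. replace (Nat.eqb j k) with false by (symmetry; now apply Nat.eqb_neq).
  (* partial fractions: [1 / ((x - u_k)(x - u_j)) = (1/(x - u_k) - 1/(x - u_j)) / (u_k - u_j)] *)
  change (minus ?p ?q) with (p - q). match goal with |- ?a = ?b => change (@eq C a b) end.
  field. repeat split; auto. now apply Cminus_eq_contra.
Qed.
End Cycle.

(** * The Schlesinger system *)

Lemma msum_entries M (f : nat -> mat2) :
  msum M f = Mat2 (sumC M (fun i => m11 (f i))) (sumC M (fun i => m12 (f i)))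
                  (sumC M (fun i => m21 (f i))) (sumC M (fun i => m22 (f i))).
Proof. induction M as [|M IH]; [reflexivity|]. simpl. now rewrite IH. Qed.

Lemma msum_ext M (f g : nat -> mat2) : (forall j, (j < M)%nat -> f j = g j) -> msum M f = msum M g.
Proof.
  induction M as [|M IH]; intros H; [reflexivity|]. simpl.
  rewrite IH by (intros; apply H; lia). now rewrite H by lia.
Qed.

Lemma msum_upper M (x : nat -> C) : msum M (fun j => Mat2 0 (x j) 0 0) = Mat2 0 (sumC M x) 0 0.
Proof. rewrite msum_entries. simpl. now rewrite !sumC_0. Qed.

Lemma mopp_upper (x : C) : mopp (Mat2 0 x 0 0) = Mat2 0 (- x) 0 0.
Proof. unfold mopp, mscale. simpl. f_equal; apply injective_projections; simpl; ring. Qed.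

Lemma comm_upper (a x y : C) :
  comm (Mat2 a x 0 (- a)) (Mat2 a y 0 (- a)) = Mat2 0 (2 * a * (y - x)) 0 0.
Proof.
  unfold comm, madd, mopp, mscale, mmul. simpl.
  f_equal; apply injective_projections; simpl; ring.
Qed.

Lemma mderiv_upper (F : C -> mat2) (a b d : C) (f : C -> C) z0 l :
  (forall z, F z = Mat2 a (f z) b d) -> is_Cderive f z0 l -> mderiv F z0 (Mat2 0 l 0 0).
Proof.
  intros HF Hf. unfold mderiv. simpl. split; [|split; [|split]].
  - apply (is_derive_ext (K:=C_AbsRing) (V:=C_NormedModule) (fun _ => a));
      [intros; now rewrite HF | apply is_Cderive_const].
  - apply (is_derive_ext (K:=C_AbsRing) (V:=C_NormedModule) f); [intros; now rewrite HF | exact Hf].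
  - apply (is_derive_ext (K:=C_AbsRing) (V:=C_NormedModule) (fun _ => b));
      [intros; now rewrite HF | apply is_Cderive_const].
  - apply (is_derive_ext (K:=C_AbsRing) (V:=C_NormedModule) (fun _ => d));
      [intros; now rewrite HF | apply is_Cderive_const].
Qed.

Section Coefficients.

Variables (g : nat) (n : Z) (U : (nat -> C) -> Prop)
  (sigma dsigma : nat -> R -> C) (V : nat -> (nat -> C) -> R -> C) (c : nat -> C).

Local Notation N := (2 * g + 1)%nat.
Local Notation a u := (a_coef g n c sigma dsigma V u).
Local Notation A u := (Amat g n c sigma dsigma V u).

Hypothesis U_open : openN N U.
Hypothesis U_distinct : forall u, U u -> forall i j, (i < N)%nat -> (j < N)%nat -> i <> j -> u i <> u j.
Hypothesis sigma_loop : forall k, (k < 2 * g)%nat ->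
  (forall t, is_derive (sigma k) t (dsigma k t)) /\ (forall t, continuous (dsigma k) t) /\
  sigma k 0%R = sigma k 1%R.
Hypothesis sigma_avoids : forall k u t i, (k < 2 * g)%nat -> U u -> 0 <= t <= 1 -> (i < N)%nat ->
  sigma k t <> u i.
Hypothesis V_sq : forall k u t, (k < 2 * g)%nat -> U u -> 0 <= t <= 1 ->
  V k u t * V k u t = branchpoly N u (sigma k t).
Hypothesis V_closed : forall k u, (k < 2 * g)%nat -> U u -> V k u 0%R = V k u 1%R.
Hypothesis V_cont : forall k, (k < 2 * g)%nat -> jcont N U (V k).

Definition da_coef (u : nat -> C) (k j : nat) : C :=
  sumC (2 * g) (fun m => c m * CRInt (dintegrand n (sigma m) (dsigma m) (V m) u k j) 0 1).

Lemma a_coef_deriv u k j : U u -> (k < N)%nat -> (j < N)%nat ->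
  is_Cderive (fun z => a (upd u k z) j) (u k) (da_coef u k j).
Proof.
  intros Hu Hk Hj. apply is_Cderive_sumC. intros m Hm. apply is_Cderive_scal.
  destruct (sigma_loop m Hm) as [Hs [Hs' _]]. apply (integral_deriv N n U); auto.
Qed.

Lemma da_coef_offdiag u k j : U u -> (k < N)%nat -> (j < N)%nat -> k <> j ->
  da_coef u k j = (- IZR n / 2) / (u k - u j) * (a u k - a u j).
Proof.
  intros Hu Hk Hj Hkj. unfold da_coef, a_coef. rewrite <- sumC_minus, <- sumC_scal.
  apply sumC_ext. intros m Hm. destruct (sigma_loop m Hm) as [Hs [Hs' _]].
  rewrite !cyc_int_integrand, (dintegrand_offdiag N n U); auto. ring.
Qed.

Lemma da_coef_sum u k : U u -> (k < N)%nat -> sumC N (fun j => da_coef u k j) = 0.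
Proof.
  intros Hu Hk. unfold da_coef. rewrite sumC_swap, <- (sumC_0 (2 * g)).
  apply sumC_ext. intros m Hm. destruct (sigma_loop m Hm) as [Hs [Hs' Hs01]].
  rewrite sumC_scal, (sum_dintegrand N n U); auto. ring.
Qed.

Lemma Amat_comm u k j : U u -> (k < N)%nat -> (j < N)%nat -> k <> j ->
  mscale (/ (u k - u j)) (comm (A u k) (A u j)) = Mat2 0 (da_coef u k j) 0 0.
Proof.
  intros Hu Hk Hj Hkj. assert (Hukj : u k - u j <> 0) by (apply Cminus_eq_contra; auto).
  unfold Amat. rewrite RtoC_opp, comm_upper, da_coef_offdiag by auto.
  unfold mscale. simpl. rewrite RtoC_div by lra. f_equal; field; auto.
Qed.

Lemma schlesinger_offdiag u k j : U u -> (k < N)%nat -> (j < N)%nat -> k <> j ->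
  mderiv (fun z => A (upd u k z) j) (u k) (mscale (/ (u k - u j)) (comm (A u k) (A u j))).
Proof.
  intros Hu Hk Hj Hkj. rewrite Amat_comm by auto.
  apply (mderiv_upper _ (RtoC (IZR n / 4)) 0 (RtoC (- (IZR n / 4))) (fun z => a (upd u k z) j));
    [reflexivity | now apply a_coef_deriv].
Qed.

Lemma schlesinger_diag u k : U u -> (k < N)%nat ->
  mderiv (fun z => A (upd u k z) k) (u k)
    (mopp (msum N (fun j => if Nat.eqb j k then mzero
                             else mscale (/ (u k - u j)) (comm (A u k) (A u j))))).
Proof.
  intros Hu Hk.
  rewrite (msum_ext N _ (fun j => Mat2 0 (if Nat.eqb j k then 0 else da_coef u k j) 0 0)),
    msum_upper, mopp_upper.
  2: { intros j Hj. destruct (Nat.eqb_spec j k); [reflexivity | now apply Amat_comm]. }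
  set (S := sumC N (fun j => if Nat.eqb j k then 0 else da_coef u k j)).
  assert (HS : da_coef u k k = - S).
  { pose proof (da_coef_sum u k Hu Hk) as E. rewrite (sumC_split N k) in E by auto. fold S in E.
    replace (da_coef u k k) with (da_coef u k k + S - S) by ring. rewrite E. ring. }
  rewrite <- HS.
  apply (mderiv_upper _ (RtoC (IZR n / 4)) 0 (RtoC (- (IZR n / 4))) (fun z => a (upd u k z) k));
    [reflexivity | now apply a_coef_deriv].
Qed.

Lemma Ainf_const u k : U u -> (k < N)%nat ->
  mderiv (fun z => Ainf g n c sigma dsigma V (upd u k z)) (u k) mzero.
Proof.
  intros Hu Hk.
  replace mzero with (Mat2 0 (RtoC (-1) * sumC N (fun i => da_coef u k i)) 0 0)
    by (rewrite da_coef_sum by auto; unfold mzero; f_equal; ring).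
  apply (mderiv_upper _ (RtoC (-1) * sumC N (fun _ => RtoC (IZR n / 4)))
           (RtoC (-1) * sumC N (fun _ => RtoC 0)) (RtoC (-1) * sumC N (fun _ => RtoC (- (IZR n / 4))))
           (fun z => RtoC (-1) * sumC N (fun i => a (upd u k z) i))).
  - intros z. unfold Ainf, mopp, mscale. now rewrite msum_entries.
  - apply is_Cderive_scal, is_Cderive_sumC. intros; now apply a_coef_deriv.
Qed.
End Coefficients.

Theorem corollary1
  (g : nat) (n : Z) (U : (nat -> C) -> Prop)
  (sigma dsigma : nat -> R -> C) (V : nat -> (nat -> C) -> R -> C)
  (c : nat -> C) :
  (1 <= g)%nat ->
  n <> 0%Z ->
  (* u = (u_0, ..., u_{2g}) ranges over an open set of pairwise distinct points *)
  openN (2 * g + 1) U ->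
  (forall u, U u -> forall i j, (i < 2 * g + 1)%nat -> (j < 2 * g + 1)%nat ->
     i <> j -> u i <> u j) ->
  (* the u-projections of the cycles gamma_k: C^1 closed loops *)
  (forall k, (k < 2 * g)%nat ->
     (forall t, is_derive (sigma k) t (dsigma k t)) /\
     (forall t, continuous (dsigma k) t) /\
     sigma k 0%R = sigma k 1%R) ->
  (* the cycles avoid the branch points for all u in U *)
  (forall k u t i, (k < 2 * g)%nat -> U u -> (0 <= t <= 1)%R -> (i < 2 * g + 1)%nat ->
     sigma k t <> u i) ->
  (* V k u t is the v-coordinate of the cycle gamma_k (on the curve for u) *)
  (forall k u t, (k < 2 * g)%nat -> U u -> (0 <= t <= 1)%R ->
     V k u t * V k u t = branchpoly (2 * g + 1) u (sigma k t)) ->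
  (* the cycles are closed on the curve *)
  (forall k u, (k < 2 * g)%nat -> U u -> V k u 0%R = V k u 1%R) ->
  (* the cycles are transported continuously: V k is jointly continuous in (u, t) *)
  (forall k u t, (k < 2 * g)%nat -> U u -> (0 <= t <= 1)%R ->
     forall eps : R, (0 < eps)%R -> exists delta : R, (0 < delta)%R /\
       forall u' t', U u' -> (0 <= t' <= 1)%R ->
         (forall i, (i < 2 * g + 1)%nat -> (Cmod (u' i - u i) < delta)%R) ->
         (Rabs (t' - t) < delta)%R ->
         (Cmod (V k u' t' - V k u t) < eps)%R) ->
  forall u, U u ->
    (* Schlesinger system *)
    (forall j k, (j < 2 * g + 1)%nat -> (k < 2 * g + 1)%nat -> k <> j ->
       mderiv (fun z => Amat g n c sigma dsigma V (upd u k z) j) (u k)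
         (mscale (/ (u k - u j))
            (comm (Amat g n c sigma dsigma V u k) (Amat g n c sigma dsigma V u j)))) /\
    (forall k, (k < 2 * g + 1)%nat ->
       mderiv (fun z => Amat g n c sigma dsigma V (upd u k z) k) (u k)
         (mopp (msum (2 * g + 1) (fun j =>
            if Nat.eqb j k then mzero
            else mscale (/ (u k - u j))
                   (comm (Amat g n c sigma dsigma V u k) (Amat g n c sigma dsigma V u j)))))) /\
    (* A^{(infinity)} = - sum_i A^{(i)} is constant (all partial derivatives vanish) *)
    (forall k, (k < 2 * g + 1)%nat ->
       mderiv (fun z => Ainf g n c sigma dsigma V (upd u k z)) (u k) mzero).
Proof.
  intros _ _ HU Hdist Hsig Hav Hsq Hcl Hcont u Hu.
  assert (Hjc : forall m, (m < 2 * g)%nat -> jcont (2 * g + 1) U (V m))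
    by (intros m Hm u0 t Hu0 Ht; now apply Hcont).
  split; [|split].
  - intros j k Hj Hk Hkj. now apply (schlesinger_offdiag g n U).
  - intros k Hk. now apply (schlesinger_diag g n U).
  - intros k Hk. now apply (Ainf_const g n U).
Qed.
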